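(* There exist absolute constants $c>0$ and $C>0$ such that the following holds. Let $n\ge2$ be an integer and $L,B,\varepsilon>0$ with $\varepsilon\le LB^2/4$. Then for every PIFO algorithm $\mathcal{A}$ there exist a dimension $d\le C\big(1+Bn^{-1/4}\sqrt{L/\varepsilon}\big)$ and functions $f_1,\dots,f_n:\mathbb{R}^d\to\mathbb{R}$ such that $\{f_i\}_{i=1}^n$ is $L$-average smooth, $f=\frac1n\sum_i f_i$ is convex and has a minimizer $x^*$ with $\|x_0-x^*\|_2\le B$ ($x_0$ the initial point of $\mathcal{A}$), and the iterates of $\mathcal{A}$ satisfy $\mathbb{E} f(x_t)-f(x^* )\ge\varepsilon$ for all integers $0\le t\le c\big(n+Bn^{3/4}\sqrt{L/\varepsilon}\big)$. That is, $\mathcal{A}$ needs $\Omega(n+Bn^{3/4}\sqrt{L/\varepsilon})$ oracle queries.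
   Context: Differentiable $f_1,\dots,f_n:\mathbb{R}^d\to\mathbb{R}$ are $L$-average smooth if $\frac1n\sum_{i=1}^n\|\nabla f_i(x)-\nabla f_i(y)\|_2^2\le L^2\|x-y\|_2^2$ for all $x,y$. For $\gamma>0$, $\mathrm{prox}^{\gamma}_g(x)=\arg\min_u\{g(u)+\frac{1}{2\gamma}\|x-u\|_2^2\}$. PIFO algorithm: given $f_1,\dots,f_n:\mathbb{R}^d\to\mathbb{R}$ and $f=\frac1n\sum_i f_i$, a PIFO algorithm $\mathcal{A}$ is specified by a probability vector $(p_1,\dots,p_n)$ ($p_j\ge0$, $\sum_j p_j=1$), an initial point $x_0$ and parameters $\gamma_t>0$; it draws indices $i_1,i_2,\dots$ independently with $\mathbb{P}(i_t=j)=p_j$, at step $t\ge1$ queries the oracle $h_f(x_{t-1},i_t,\gamma_t)=[f_{i_t}(x_{t-1}),\nabla f_{i_t}(x_{t-1}),\mathrm{prox}^{\gamma_t}_{f_{i_t}}(x_{t-1})]$, and outputs an iterate $x_t\in\mathrm{span}\{x_0,\dots,x_{t-1},\nabla f_{i_1}(x_0),\dots,\nabla f_{i_t}(x_{t-1}),\mathrm{prox}^{\gamma_1}_{f_{i_1}}(x_0),\dots,\mathrm{prox}^{\gamma_t}_{f_{i_t}}(x_{t-1})\}$ (the choice within the span may depend on all previously observed information). Iterate $x_t$ uses $t$ oracle queries. *)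

From Stdlib Require Import Reals List.
Import ListNotations.
Open Scope R_scope.

(* Vectors of R^d are represented as functions nat -> R that vanish from
   index d on (predicate [inR d]). *)
Definition vec := nat -> R.

Fixpoint sumd (d : nat) (u : nat -> R) : R :=
  match d with O => 0 | S k => sumd k u + u k end.

Definition inR (d : nat) (x : vec) : Prop := forall k, (d <= k)%nat -> x k = 0.

Definition vadd (x y : vec) : vec := fun k => x k + y k.
Definition vsub (x y : vec) : vec := fun k => x k - y k.
Definition vscal (a : R) (x : vec) : vec := fun k => a * x k.
Definition vzero : vec := fun _ => 0.

Definition dot (d : nat) (x y : vec) : R := sumd d (fun k => x k * y k).
Definition norm2 (d : nat) (x : vec) : R := dot d x x.
Definition norm (d : nat) (x : vec) : R := sqrt (norm2 d x).

Definition has_grad (d : nat) (f : vec -> R) (x g : vec) : Prop :=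
  inR d g /\
  forall eps, 0 < eps -> exists delta, 0 < delta /\
    forall h, inR d h -> norm d h < delta ->
      Rabs (f (vadd x h) - f x - dot d g h) <= eps * norm d h.

Definition is_prox (d : nat) (g : vec -> R) (gamma : R) (x u : vec) : Prop :=
  inR d u /\
  forall v, inR d v ->
    g u + / (2 * gamma) * norm2 d (vsub x u) <= g v + / (2 * gamma) * norm2 d (vsub x v).

Definition convex_on (d : nat) (F : vec -> R) : Prop :=
  forall x y a, inR d x -> inR d y -> 0 <= a <= 1 ->
    F (vadd (vscal a x) (vscal (1 - a) y)) <= a * F x + (1 - a) * F y.

Definition avg_smooth (n d : nat) (gf : nat -> vec -> vec) (L : R) : Prop :=
  forall x y, inR d x -> inR d y ->
    / INR n * sumd n (fun i => norm2 d (vsub (gf i x) (gf i y)))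
      <= L ^ 2 * norm2 d (vsub x y).

Definition favg (n : nat) (f : nat -> vec -> R) : vec -> R :=
  fun x => / INR n * sumd n (fun i => f i x).

(* One oracle answer: index i_t, f_{i_t}(x_{t-1}), grad f_{i_t}(x_{t-1}),
   prox^{gamma_t}_{f_{i_t}}(x_{t-1}). *)
Record obs := mkobs { oidx : nat; oval : R; ograd : vec; oprox : vec }.

(* A PIFO algorithm (in a given dimension): probability vector p, initial
   point x0, parameters gamma_t, and the rule producing x_t from the whole
   observed history (histories are lists, most recent observation first). *)
Record pifo := mkpifo {
  pp : nat -> R;
  px0 : vec;
  pgam : nat -> R;
  pnext : list obs -> vec }.

Definition xof (A : pifo) (h : list obs) : vec :=
  match h with [] => px0 A | _ :: _ => pnext A h end.

Fixpoint tails {T} (l : list T) : list (list T) :=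
  match l with [] => [] | _ :: l' => l' :: tails l' end.

Fixpoint lincomb (cs : list R) (vs : list vec) : vec :=
  match cs, vs with
  | c :: cs', v :: vs' => vadd (vscal c v) (lincomb cs' vs')
  | _, _ => vzero
  end.

Definition in_span (S : list vec) (v : vec) : Prop :=
  exists cs, length cs = length S /\ v = lincomb cs S.

(* the vectors available when producing x_t from history h (length t):
   x_0,...,x_{t-1}, the gradients and the prox outputs observed. *)
Definition span_set (A : pifo) (h : list obs) : list vec :=
  map (xof A) (tails h) ++ map ograd h ++ map oprox h.

Definition valid_pifo (n d : nat) (A : pifo) : Prop :=
  (forall j, (j < n)%nat -> 0 <= pp A j) /\ sumd n (pp A) = 1 /\
  inR d (px0 A) /\
  (forall t, (1 <= t)%nat -> 0 < pgam A t) /\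
  (forall h, h <> [] -> in_span (span_set A h) (pnext A h)).

(* history generated by the index sequence is = [i_t; ...; i_1] *)
Fixpoint hist (A : pifo) (f : nat -> vec -> R) (gf : nat -> vec -> vec)
    (prox : nat -> R -> vec -> vec) (is : list nat) : list obs :=
  match is with
  | [] => []
  | i :: is' =>
      let h := hist A f gf prox is' in
      let x := xof A h in
      mkobs i (f i x) (gf i x) (prox i (pgam A (S (length is'))) x) :: h
  end.

(* expectation over t i.i.d. indices with law p on {0,...,n-1} *)
Fixpoint expect (n : nat) (p : nat -> R) (t : nat) (G : list nat -> R) : R :=
  match t with
  | O => G []
  | S t' => sumd n (fun j => p j * expect n p t' (fun l => G (j :: l)))
  end.

From Stdlib Require Import Reals List Lra Lia Psatz Classical ZArith.
Import ListNotations.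
Open Scope R_scope.

(* All hard instances are averages of "orthogonal quadratics"
     Phi(x) = sum_p a_p/2 <w_p,x>^2 - b_p <w_p,x>,   w_p pairwise orthogonal,
   whose gradient and proximal point have closed forms in span{w_p} resp.
   x + span{w_p}.  The w_p are built from an orthonormal frame u_0..u_{m-1}
   of R^(2m) orthogonal to the initial point x0.  Call x "k-revealed" if it is
   orthogonal to u_l for all l >= k.  The components f_i are designed so that
   an oracle call to f_i at a k-revealed point only returns (k+1)-revealed
   vectors, and (k+1) only when i is one of at most two "active" indices of
   total probability <= 2/n; all other answers stay k-revealed.  By induction
   on the history every iterate is k-revealed with k = number of active hits,
   while the gap f(x) - f* on k-revealed points is an affine decreasing bound
   in k; linearity of expectation (E k = t * P(active)) then bounds the
   expected gap.  Two instances are used: for r = B n^(-1/4) sqrt(L/eps) < 30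
   a one-direction instance in dimension 2, otherwise the classical
   "chain" quadratic with m ~ r/3 links split into odd and even links carried
   by the two active components. *)

Lemma sumd_ext d u v : (forall k, (k < d)%nat -> u k = v k) -> sumd d u = sumd d v.
Proof. induction d; simpl; intros H; auto. rewrite IHd by (intros; apply H; lia). rewrite H by lia. auto. Qed.

Lemma sumd_add d u v : sumd d (fun k => u k + v k) = sumd d u + sumd d v.
Proof. induction d; simpl; [lra|]. rewrite IHd; lra. Qed.

Lemma sumd_scal d c u : sumd d (fun k => c * u k) = c * sumd d u.
Proof. induction d; simpl; [lra|]. rewrite IHd; lra. Qed.

Lemma sumd_sub d u v : sumd d (fun k => u k - v k) = sumd d u - sumd d v.
Proof. induction d; simpl; [lra|]. rewrite IHd; lra. Qed.

Lemma sumd_zero d : sumd d (fun _ => 0) = 0.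
Proof. induction d; simpl; [lra|]. rewrite IHd; lra. Qed.

Lemma sumd_const d c : sumd d (fun _ => c) = INR d * c.
Proof. induction d; simpl sumd; [simpl; lra|]. rewrite IHd, S_INR; lra. Qed.

Lemma sumd_le d u v : (forall k, (k < d)%nat -> u k <= v k) -> sumd d u <= sumd d v.
Proof. induction d; simpl; intros H; [lra|]. pose proof (H d ltac:(lia)). pose proof (IHd ltac:(intros; apply H; lia)). lra. Qed.

Lemma sumd_nonneg d u : (forall k, (k < d)%nat -> 0 <= u k) -> 0 <= sumd d u.
Proof. intros H. rewrite <- (sumd_zero d). apply sumd_le. auto. Qed.

Lemma sumd_exch d P F : sumd d (fun k => sumd P (fun p => F k p)) = sumd P (fun p => sumd d (fun k => F k p)).
Proof. induction d; simpl. - rewrite sumd_zero; auto. - rewrite IHd, <- sumd_add. auto. Qed.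

Lemma sumd_single P F p : (p < P)%nat -> (forall q, (q < P)%nat -> q <> p -> F q = 0) -> sumd P F = F p.
Proof.
  induction P; intros Hp H; [lia|]. simpl.
  destruct (Nat.eq_dec p P).
  - subst. rewrite (sumd_ext _ _ (fun _ => 0)), sumd_zero. lra. intros; apply H; lia.
  - rewrite IHP by (auto; lia). rewrite (H P) by lia. lra.
Qed.

Lemma sumd_two d F a b : (a < d)%nat -> (b < d)%nat -> a <> b ->
  (forall k, (k < d)%nat -> k <> a -> k <> b -> F k = 0) -> sumd d F = F a + F b.
Proof.
  induction d; intros Ha Hb Hab H; [lia|]. simpl.
  destruct (Nat.eq_dec a d); destruct (Nat.eq_dec b d); subst; try lia.
  - rewrite (sumd_single d F b) by (auto; lia || (intros; apply H; lia)). lra.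
  - rewrite (sumd_single d F a) by (auto; lia || (intros; apply H; lia)). lra.
  - rewrite IHd by (auto; lia || (intros; apply H; lia)). rewrite (H d) by lia. lra.
Qed.

Lemma sumd_indicator n j c : (j < n)%nat -> sumd n (fun i => if (i =? j)%nat then c else 0) = c.
Proof.
  intros Hj. rewrite (sumd_single n _ j); auto. rewrite Nat.eqb_refl; auto.
  intros q Hq Hqj. destruct (Nat.eqb_spec q j); auto; lia.
Qed.

Lemma sumd_shift k F : sumd (S k) F = F 0%nat + sumd k (fun j => F (S j)).
Proof. induction k; simpl; [lra|]. simpl in IHk. rewrite IHk. lra. Qed.

Lemma sumd_pairs M F : sumd (2 * M) F = sumd M (fun p => F (2 * p)%nat + F (2 * p + 1)%nat).
Proof.
  induction M; [simpl; lra|].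
  replace (2 * S M)%nat with (S (S (2 * M))) by lia.
  change (sumd (S (S (2*M))) F) with (sumd (2*M) F + F (2*M)%nat + F (S (2*M))).
  change (sumd (S M) (fun p => F (2 * p)%nat + F (2 * p + 1)%nat))
    with (sumd M (fun p => F (2 * p)%nat + F (2 * p + 1)%nat) + (F (2 * M)%nat + F (2 * M + 1)%nat)).
  rewrite IHM. replace (2 * M + 1)%nat with (S (2*M)) by lia. lra.
Qed.

Lemma sumd_telescope K (z : nat -> R) : sumd K (fun i => z i - z (S i)) = z O - z K.
Proof. induction K; simpl; [ring|]. rewrite IHK. ring. Qed.

Lemma sumd_mono_len K m F : (K <= m)%nat -> (forall k, 0 <= F k) -> sumd K F <= sumd m F.
Proof. intros H HF. induction H; [lra|]. simpl. pose proof (HF m). lra. Qed.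

(* Cauchy-Schwarz for finite sums, via the nonnegative quadratic
   s |-> sum_k (u_k s - v_k)^2. *)
Lemma CS_sumd d u v : (sumd d (fun k => u k * v k))^2 <= sumd d (fun k => u k ^ 2) * sumd d (fun k => v k ^ 2).
Proof.
  set (A := sumd d (fun k => u k ^ 2)). set (B := sumd d (fun k => v k ^ 2)).
  set (C := sumd d (fun k => u k * v k)).
  assert (Hq : forall s, 0 <= A * s^2 - 2 * C * s + B).
  { intros s. assert (E : A * s^2 - 2*C*s + B = sumd d (fun k => (u k * s - v k)^2)).
    { unfold A, B, C. rewrite (sumd_ext d (fun k => (u k * s - v k)^2) (fun k => (s^2 * u k^2 + (-(2*s)) * (u k * v k)) + v k^2)) by (intros; ring).
      rewrite sumd_add, sumd_add, sumd_scal, sumd_scal. ring. }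
    rewrite E. apply sumd_nonneg. intros; apply pow2_ge_0. }
  assert (HA : 0 <= A) by (apply sumd_nonneg; intros; apply pow2_ge_0).
  assert (HB : 0 <= B) by (apply sumd_nonneg; intros; apply pow2_ge_0).
  destruct (Req_dec A 0) as [H0|H0].
  - assert (C = 0). { destruct (Req_dec C 0); auto. pose proof (Hq ((B+1)/(2*C))). rewrite H0 in H1.
      replace (0 * ((B + 1) / (2 * C)) ^ 2 - 2 * C * ((B + 1) / (2 * C)) + B) with (-1) in H1 by (field; auto). lra. }
    rewrite H, H0. lra.
  - pose proof (Hq (C / A)).
    replace (A * (C / A) ^ 2 - 2 * C * (C / A) + B) with ((A*B - C^2)/A) in H by (field; auto).
    assert (0 < A) by lra.
    assert (0 <= A * B - C^2). { apply (Rmult_le_compat_r A) in H; [|lra]. field_simplify in H; lra. }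
    lra.
Qed.

Lemma sumd_sq_bound K y : (sumd K y)^2 <= INR K * sumd K (fun k => y k ^ 2).
Proof.
  pose proof (CS_sumd K (fun _ => 1) y). simpl in H.
  rewrite (sumd_ext K (fun k => 1 * y k) y) in H by (intros; ring).
  rewrite (sumd_ext K (fun _ => 1*(1*1)) (fun _ => 1)), sumd_const in H by (intros; ring).
  rewrite (sumd_ext K (fun k => y k ^ 2) (fun k => y k * (y k * 1))) by (intros; ring). lra.
Qed.

Lemma sumd_below_average n F : (1 <= n)%nat -> exists j, (j < n)%nat /\ F j <= sumd n F / INR n.
Proof.
  intros Hn. destruct (classic (exists j, (j < n)%nat /\ F j <= sumd n F / INR n)) as [H|H]; auto.
  exfalso. assert (Hall : forall j, (j < n)%nat -> sumd n F / INR n < F j).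
  { intros j Hj. destruct (Rlt_le_dec (sumd n F / INR n) (F j)); auto. exfalso; apply H; eauto. }
  assert (sumd n (fun _ => sumd n F / INR n) < sumd n F).
  { clear H. destruct n; [lia|]. simpl. apply Rplus_le_lt_compat.
    apply sumd_le; intros; apply Rlt_le, Hall; lia. apply Hall; lia. }
  rewrite sumd_const in H0. assert (0 < INR n) by (apply lt_0_INR; lia).
  field_simplify in H0; lra.
Qed.

(* Any probability vector on n >= 2 points has two distinct points of total
   mass at most 2/n (compare each j with its cyclic successor). *)
Lemma light_pair_exists n p : (2 <= n)%nat -> (forall j, (j < n)%nat -> 0 <= p j) -> sumd n p = 1 ->
  exists jA jB, (jA < n)%nat /\ (jB < n)%nat /\ jA <> jB /\ p jA + p jB <= 2 / INR n.
Proof.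
  intros Hn Hp Hs.
  set (nx := fun j => if (S j <? n)%nat then S j else O).
  assert (E : sumd n (fun j => p (nx j)) = 1).
  { destruct n as [|n']; [lia|]. rewrite <- Hs.
    change (sumd (S n') (fun j => p (nx j))) with (sumd n' (fun j => p (nx j)) + p (nx n')).
    rewrite (sumd_shift n' p).
    assert (nx n' = O) as ->. { unfold nx. destruct (Nat.ltb_spec (S n') (S n')); auto; lia. }
    rewrite (sumd_ext n' _ (fun j => p (S j))). lra. intros k Hk. unfold nx. destruct (Nat.ltb_spec (S k) (S n')); auto; lia. }
  destruct (sumd_below_average n (fun j => p j + p (nx j))) as [j [Hj Hle]]; [lia|].
  rewrite sumd_add, E, Hs in Hle.
  exists j, (nx j). split; auto. unfold nx in *. destruct (Nat.ltb_spec (S j) n); repeat split; try lia; lra.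
Qed.

(* Euclidean geometry of R^d, with vectors represented as [nat -> R]. *)

Definition vsum (P : nat) (c : nat -> R) (w : nat -> vec) : vec :=
  fun k => sumd P (fun p => c p * w p k).

Lemma dot_comm d x y : dot d x y = dot d y x.
Proof. unfold dot. apply sumd_ext; intros; ring. Qed.

Lemma dot_add_r d x y z : dot d x (vadd y z) = dot d x y + dot d x z.
Proof. unfold dot, vadd. rewrite <- sumd_add. apply sumd_ext; intros; ring. Qed.
Lemma dot_sub_r d x y z : dot d x (vsub y z) = dot d x y - dot d x z.
Proof. unfold dot, vsub. rewrite <- sumd_sub. apply sumd_ext; intros; ring. Qed.
Lemma dot_scal_r d x a y : dot d x (vscal a y) = a * dot d x y.
Proof. unfold dot, vscal. rewrite <- sumd_scal. apply sumd_ext; intros; ring. Qed.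
Lemma dot_zero_r d x : dot d x vzero = 0.
Proof. unfold dot. rewrite <- (sumd_zero d). apply sumd_ext; intros; unfold vzero; ring. Qed.
Lemma dot_add_l d x y z : dot d (vadd y z) x = dot d y x + dot d z x.
Proof. rewrite !(dot_comm d _ x). apply dot_add_r. Qed.
Lemma dot_sub_l d x y z : dot d (vsub y z) x = dot d y x - dot d z x.
Proof. rewrite !(dot_comm d _ x). apply dot_sub_r. Qed.
Lemma dot_scal_l d x a y : dot d (vscal a y) x = a * dot d y x.
Proof. rewrite !(dot_comm d _ x). apply dot_scal_r. Qed.

Lemma dot_vsum_r d x P c w : dot d x (vsum P c w) = sumd P (fun p => c p * dot d x (w p)).
Proof.
  unfold dot, vsum.
  rewrite (sumd_ext d _ (fun k => sumd P (fun p => x k * (c p * w p k)))).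
  2:{ intros. rewrite <- sumd_scal. auto. }
  rewrite sumd_exch. apply sumd_ext. intros. rewrite <- sumd_scal. apply sumd_ext; intros; ring.
Qed.
Lemma dot_vsum_l d x P c w : dot d (vsum P c w) x = sumd P (fun p => c p * dot d (w p) x).
Proof. rewrite dot_comm, dot_vsum_r. apply sumd_ext; intros. rewrite dot_comm; auto. Qed.

Lemma norm2_ext d x y : (forall k, x k = y k) -> norm2 d x = norm2 d y.
Proof. intros H. unfold norm2, dot. apply sumd_ext. intros. rewrite !H. auto. Qed.

Lemma norm2_nonneg d x : 0 <= norm2 d x.
Proof. unfold norm2, dot. apply sumd_nonneg. intros. nra. Qed.

Lemma norm_sq d x : norm d x ^ 2 = norm2 d x.
Proof. unfold norm. rewrite <- Rsqr_pow2. apply Rsqr_sqrt, norm2_nonneg. Qed.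

Lemma norm_nonneg d x : 0 <= norm d x.
Proof. unfold norm. apply sqrt_pos. Qed.

Lemma CS_dot d x y : (dot d x y)^2 <= norm2 d x * norm2 d y.
Proof.
  unfold norm2, dot. pose proof (CS_sumd d x y).
  rewrite (sumd_ext d (fun k => x k ^2) (fun k => x k * x k)) in H by (intros; ring).
  rewrite (sumd_ext d (fun k => y k ^2) (fun k => y k * y k)) in H by (intros; ring). auto.
Qed.

Lemma norm2_vadd d x y : norm2 d (vadd x y) = norm2 d x + 2 * dot d x y + norm2 d y.
Proof. unfold norm2. rewrite dot_add_l, !dot_add_r, (dot_comm d y x). ring. Qed.

Lemma norm2_vsub d x y : norm2 d (vsub x y) = norm2 d x - 2 * dot d x y + norm2 d y.
Proof. unfold norm2. rewrite dot_sub_l, !dot_sub_r, (dot_comm d y x). ring. Qed.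

Lemma inR_vsum d P c w : (forall p, (p < P)%nat -> inR d (w p)) -> inR d (vsum P c w).
Proof. intros H k Hk. unfold vsum. rewrite <- (sumd_zero P). apply sumd_ext. intros. rewrite H; auto; ring. Qed.
Lemma inR_vadd d x y : inR d x -> inR d y -> inR d (vadd x y).
Proof. intros Hx Hy k Hk. unfold vadd. rewrite Hx, Hy; auto; ring. Qed.
Lemma inR_vsub d x y : inR d x -> inR d y -> inR d (vsub x y).
Proof. intros Hx Hy k Hk. unfold vsub. rewrite Hx, Hy; auto; ring. Qed.

Lemma norm2_vsum_orth d P c w :
  (forall p q, (p < P)%nat -> (q < P)%nat -> p <> q -> dot d (w p) (w q) = 0) ->
  norm2 d (vsum P c w) = sumd P (fun p => c p ^ 2 * norm2 d (w p)).
Proof.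
  intros Ho. unfold norm2. rewrite dot_vsum_l. apply sumd_ext. intros p Hp.
  rewrite dot_vsum_r. rewrite (sumd_single P _ p); auto.
  - unfold norm2; ring.
  - intros q Hq Hqp. rewrite Ho; auto. ring.
Qed.

(* Bessel's inequality for an orthogonal family of nonzero vectors, obtained
   from the nonnegativity of the squared norm of v minus its projection. *)
Lemma bessel_ineq d P w v :
  (forall p q, (p < P)%nat -> (q < P)%nat -> p <> q -> dot d (w p) (w q) = 0) ->
  (forall p, (p < P)%nat -> 0 < norm2 d (w p)) ->
  sumd P (fun p => (dot d (w p) v)^2 / norm2 d (w p)) <= norm2 d v.
Proof.
  intros HO HN. set (c := fun p => dot d (w p) v / norm2 d (w p)).
  pose proof (norm2_nonneg d (vsub v (vsum P c w))) as Hproj.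
  rewrite norm2_vsub, dot_vsum_r, (norm2_vsum_orth d _ _ _ HO) in Hproj.
  assert (E : sumd P (fun p => c p * dot d v (w p)) = sumd P (fun p => (dot d (w p) v)^2 / norm2 d (w p))).
  { apply sumd_ext. intros. unfold c. rewrite dot_comm. pose proof (HN k H). field. lra. }
  assert (E' : sumd P (fun p => c p ^ 2 * norm2 d (w p)) = sumd P (fun p => (dot d (w p) v)^2 / norm2 d (w p))).
  { apply sumd_ext. intros. unfold c. pose proof (HN k H). field. lra. }
  lra.
Qed.

(* Orthogonal quadratics.  A [quad] with directions w_p (pairwise orthogonal),
   curvatures a_p >= 0 and linear coefficients b_p represents
     Phi(x) = sum_p a_p/2 <w_p,x>^2 - b_p <w_p,x>.
   Its gradient lies in span{w_p} and its proximal point in x + span{w_p},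
   both with explicit coefficients. *)

Record quad := mkquad { qsize : nat; qdir : nat -> vec; qcurv : nat -> R; qlin : nat -> R }.

Definition quad_val d C (x : vec) : R :=
  sumd (qsize C) (fun p => qcurv C p / 2 * (dot d (qdir C p) x)^2 - qlin C p * dot d (qdir C p) x).
Definition quad_coef d C (x : vec) p : R := qcurv C p * dot d (qdir C p) x - qlin C p.
Definition quad_grad d C (x : vec) : vec := vsum (qsize C) (quad_coef d C x) (qdir C).
Definition prox_coef d C (g : R) (x : vec) p : R :=
  - g * quad_coef d C x p / (1 + g * qcurv C p * norm2 d (qdir C p)).
Definition quad_prox d C (g : R) (x : vec) : vec := vadd x (vsum (qsize C) (prox_coef d C g x) (qdir C)).

Definition valid_quad d C :=
  (forall p, (p < qsize C)%nat -> inR d (qdir C p) /\ 0 <= qcurv C p) /\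
  (forall p q, (p < qsize C)%nat -> (q < qsize C)%nat -> p <> q -> dot d (qdir C p) (qdir C q) = 0).

Lemma quad_has_grad d C x : valid_quad d C -> has_grad d (quad_val d C) x (quad_grad d C x).
Proof.
  intros [HV HO]. split.
  { apply inR_vsum. intros; apply HV; auto. }
  intros eps Heps.
  set (M := sumd (qsize C) (fun p => qcurv C p / 2 * norm2 d (qdir C p))).
  assert (HM : 0 <= M). { apply sumd_nonneg. intros. pose proof (norm2_nonneg d (qdir C k)). destruct (HV k H). nra. }
  exists (eps / (M + 1)). split. { apply Rdiv_lt_0_compat; lra. }
  intros h _ Hh.
  (* the Taylor remainder is exactly the quadratic part evaluated at h *)
  assert (E : quad_val d C (vadd x h) - quad_val d C x - dot d (quad_grad d C x) h =
     sumd (qsize C) (fun p => qcurv C p / 2 * (dot d (qdir C p) h)^2)).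
  { unfold quad_val, quad_grad. rewrite dot_vsum_l. rewrite <- !sumd_sub. apply sumd_ext. intros.
    rewrite dot_add_r. unfold quad_coef. field. }
  rewrite E.
  assert (H1 : 0 <= sumd (qsize C) (fun p => qcurv C p / 2 * (dot d (qdir C p) h)^2)).
  { apply sumd_nonneg. intros. destruct (HV k H). apply Rmult_le_pos; [lra| apply pow2_ge_0]. }
  assert (H2 : sumd (qsize C) (fun p => qcurv C p / 2 * (dot d (qdir C p) h)^2) <= M * norm2 d h).
  { unfold M. rewrite Rmult_comm, <- sumd_scal. apply sumd_le. intros. destruct (HV k H).
    pose proof (CS_dot d (qdir C k) h). pose proof (norm2_nonneg d h). pose proof (norm2_nonneg d (qdir C k)). nra. }
  rewrite Rabs_right by lra.
  rewrite <- norm_sq in H2. pose proof (norm_nonneg d h).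
  assert (M * norm d h ^ 2 <= eps * norm d h).
  { assert (M * norm d h <= eps). { apply Rle_trans with (M * (eps / (M+1))). apply Rmult_le_compat_l; lra.
      unfold Rdiv. rewrite <- Rmult_assoc. apply Rmult_le_reg_r with (M+1); [lra|].
      rewrite Rmult_assoc, Rinv_l by lra. nra. }
    simpl. nra. }
  lra.
Qed.

Lemma quad_convex d C x y a : valid_quad d C -> 0 <= a <= 1 ->
  quad_val d C (vadd (vscal a x) (vscal (1 - a) y)) <= a * quad_val d C x + (1 - a) * quad_val d C y.
Proof.
  intros [HV _] Ha. unfold quad_val. rewrite <- !sumd_scal, <- sumd_add. apply sumd_le. intros p Hp.
  destruct (HV p Hp). rewrite dot_add_r, !dot_scal_r.
  set (s := dot d (qdir C p) x). set (r := dot d (qdir C p) y).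
  assert (0 <= qcurv C p / 2 * (a * (1 - a)) * (s - r)^2).
  { apply Rmult_le_pos; [apply Rmult_le_pos; nra|apply pow2_ge_0]. }
  nra.
Qed.

Lemma quad_supporting d C u v : valid_quad d C ->
  quad_val d C u + dot d (quad_grad d C u) (vsub v u) <= quad_val d C v.
Proof.
  intros [HV _]. unfold quad_grad. rewrite dot_vsum_l. unfold quad_val.
  rewrite <- sumd_add. apply sumd_le. intros p Hp. destruct (HV p Hp). unfold quad_coef.
  rewrite dot_sub_r. set (s := dot d (qdir C p) u). set (r := dot d (qdir C p) v).
  assert (0 <= qcurv C p / 2 * (r - s)^2) by (apply Rmult_le_pos; [lra|apply pow2_ge_0]). nra.
Qed.

Lemma dot_dir_prox d C g x p : valid_quad d C -> (p < qsize C)%nat ->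
  dot d (qdir C p) (quad_prox d C g x) = dot d (qdir C p) x + prox_coef d C g x p * norm2 d (qdir C p).
Proof.
  intros [HV HO] Hp. unfold quad_prox. rewrite dot_add_r, dot_vsum_r.
  rewrite (sumd_single _ _ p).
  - unfold norm2; ring.
  - auto.
  - intros q Hq Hqp. rewrite HO; auto. ring.
Qed.

(* The optimality condition of the proximal problem: u = x - g grad Phi(u). *)
Lemma quad_prox_fixed_point d C g x k : valid_quad d C -> 0 < g ->
  quad_prox d C g x k = x k - g * quad_grad d C (quad_prox d C g x) k.
Proof.
  intros HVC Hg. pose proof HVC as [HV _].
  unfold quad_prox at 1, quad_grad, vadd, vsum. rewrite <- sumd_scal.
  enough (E : sumd (qsize C) (fun p => prox_coef d C g x p * qdir C p k) =
              sumd (qsize C) (fun p => - (g * (quad_coef d C (quad_prox d C g x) p * qdir C p k)))).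
  { rewrite E. rewrite (sumd_ext _ _ (fun p => -1 * (g * (quad_coef d C (quad_prox d C g x) p * qdir C p k))))
      by (intros; ring). rewrite sumd_scal. ring. }
  apply sumd_ext. intros p Hp. destruct (HV p Hp).
  unfold quad_coef at 1. rewrite dot_dir_prox by auto.
  unfold prox_coef, quad_coef. pose proof (norm2_nonneg d (qdir C p)).
  assert (0 <= g * qcurv C p * norm2 d (qdir C p)) by (apply Rmult_le_pos; [apply Rmult_le_pos|]; lra).
  field. lra.
Qed.

Lemma quad_is_prox d C g x : valid_quad d C -> 0 < g -> inR d x -> is_prox d (quad_val d C) g x (quad_prox d C g x).
Proof.
  intros HVC Hg Hx. pose proof HVC as [HV HO]. split.
  { apply inR_vadd; auto. apply inR_vsum; intros; apply HV; auto. }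
  intros v Hv. set (u := quad_prox d C g x). set (G := quad_grad d C u).
  pose proof (quad_supporting d C u v HVC) as Hsupp. fold G in Hsupp.
  (* |x - v|^2 = |x - u|^2 + 2 g <G, u - v> + |u - v|^2 since x - u = g G *)
  assert (Hxu : forall k, vsub x u k = vscal g G k).
  { intros k. unfold vsub, vscal, G, u. rewrite (quad_prox_fixed_point d C g x k HVC Hg). ring. }
  assert (E : norm2 d (vsub x v) = norm2 d (vsub x u) - 2 * g * dot d G (vsub v u) + norm2 d (vsub u v)).
  { rewrite (norm2_ext d (vsub x v) (vadd (vsub x u) (vsub u v))) by (intros; unfold vsub, vadd; ring).
    rewrite norm2_vadd. unfold dot at 1. rewrite (sumd_ext d _ (fun k => g * (G k * vsub u v k))).
    2:{ intros k _. rewrite Hxu. unfold vscal. ring. }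
    rewrite sumd_scal. fold (dot d G (vsub u v)).
    replace (dot d G (vsub u v)) with (- dot d G (vsub v u)) by (rewrite !dot_sub_r; ring). ring. }
  rewrite E. pose proof (norm2_nonneg d (vsub u v)).
  assert (0 < / (2 * g)) by (apply Rinv_0_lt_compat; lra).
  replace (/ (2 * g) * (norm2 d (vsub x u) - 2 * g * dot d G (vsub v u) + norm2 d (vsub u v)))
    with (/ (2 * g) * norm2 d (vsub x u) - dot d G (vsub v u) + / (2 * g) * norm2 d (vsub u v)) by (field; lra).
  nra.
Qed.

Lemma quad_grad_diff d C x y k : vsub (quad_grad d C x) (quad_grad d C y) k = vsum (qsize C) (fun p => qcurv C p * dot d (qdir C p) (vsub x y)) (qdir C) k.
Proof. unfold vsub at 1, quad_grad, vsum. rewrite <- sumd_sub. apply sumd_ext. intros. unfold quad_coef. rewrite dot_sub_r. ring. Qed.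

Lemma quad_grad_lipschitz d C amax Nmax x y : valid_quad d C ->
  (forall p, (p < qsize C)%nat -> qcurv C p <= amax /\ 0 < norm2 d (qdir C p) <= Nmax) ->
  norm2 d (vsub (quad_grad d C x) (quad_grad d C y)) <= Nmax ^ 2 * amax ^ 2 * norm2 d (vsub x y).
Proof.
  intros HVC HB. pose proof HVC as [HV HO].
  rewrite (norm2_ext d _ _ (quad_grad_diff d C x y)).
  rewrite (norm2_vsum_orth d _ _ _ HO).
  pose proof (bessel_ineq d (qsize C) (qdir C) (vsub x y) HO ltac:(intros; apply HB; auto)).
  apply Rle_trans with (Nmax ^ 2 * amax^2 * sumd (qsize C) (fun p => (dot d (qdir C p) (vsub x y))^2 / norm2 d (qdir C p))).
  2:{ apply Rmult_le_compat_l; auto. pose proof (pow2_ge_0 amax). pose proof (pow2_ge_0 Nmax). nra. }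
  rewrite <- sumd_scal. apply sumd_le. intros p Hp. destruct (HB p Hp) as [Ha [HN1 HN2]]. destruct (HV p Hp).
  set (N := norm2 d (qdir C p)) in *. set (s := dot d (qdir C p) (vsub x y)) in *. clearbody N s.
  assert (HN0 : N <> 0) by lra.
  replace ((qcurv C p * s) ^ 2 * N) with ((qcurv C p)^2 * N^2 * (s^2 / N)) by (field; exact HN0).
  assert (H2 : 0 <= s^2/N) by (unfold Rdiv; apply Rmult_le_pos; [apply pow2_ge_0|apply Rlt_le, Rinv_0_lt_compat; lra]).
  apply Rmult_le_compat_r; [exact H2|]. assert (qcurv C p ^ 2 <= amax ^ 2) by (apply pow_incr; lra).
  assert (N^2 <= Nmax^2) by (apply pow_incr; lra). assert (0 <= qcurv C p ^ 2) by apply pow2_ge_0.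
  assert (0 <= N^2) by apply pow2_ge_0. nra.
Qed.

(* An orthonormal frame u_0, ..., u_{m-1} of R^(2m) orthogonal to x0:
   u_l lives on the coordinate pair (2l, 2l+1) and is the rotation by a right
   angle of that pair of coordinates of x0 (or e_{2l} if these vanish).
   For l >= m we set u_l = 0. *)

Definition pair_radius (x0 : vec) (l : nat) : R := sqrt (x0 (2*l)%nat ^ 2 + x0 (2*l+1)%nat ^ 2).

Definition frame (m : nat) (x0 : vec) (l : nat) : vec := fun i =>
  if (l <? m)%nat then
    (if Rlt_dec 0 (pair_radius x0 l) then
       (if (i =? 2*l)%nat then x0 (2*l+1)%nat / pair_radius x0 l
        else if (i =? 2*l+1)%nat then - x0 (2*l)%nat / pair_radius x0 l else 0)
     else (if (i =? 2*l)%nat then 1 else 0))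
  else 0.

Lemma frame_off m x0 l i : i <> (2*l)%nat -> i <> (2*l+1)%nat -> frame m x0 l i = 0.
Proof.
  intros H1 H2. unfold frame. destruct (l <? m)%nat; auto. destruct (Rlt_dec _ _);
  destruct (Nat.eqb_spec i (2*l)); try lia; auto; destruct (Nat.eqb_spec i (2*l+1)); try lia; auto.
Qed.

Lemma frame_beyond m x0 l i : (m <= l)%nat -> frame m x0 l i = 0.
Proof. intros H. unfold frame. destruct (Nat.ltb_spec l m); auto; lia. Qed.

Lemma frame_inR m x0 l : inR (2*m) (frame m x0 l).
Proof.
  intros i Hi. destruct (Nat.lt_ge_cases l m).
  - apply frame_off; lia.
  - apply frame_beyond; auto.
Qed.

Lemma dot_frame m x0 l v : dot (2*m) (frame m x0 l) v =
  if (l <? m)%nat then frame m x0 l (2*l)%nat * v (2*l)%nat + frame m x0 l (2*l+1)%nat * v (2*l+1)%nat else 0.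
Proof.
  destruct (Nat.ltb_spec l m).
  - unfold dot. rewrite (sumd_two _ _ (2*l) (2*l+1)); try lia; auto.
    intros. rewrite frame_off by lia. ring.
  - unfold dot. rewrite <- (sumd_zero (2*m)). apply sumd_ext. intros. rewrite frame_beyond by lia. ring.
Qed.

Lemma pair_radius_sq x0 l : pair_radius x0 l ^ 2 = x0 (2*l)%nat ^ 2 + x0 (2*l+1)%nat ^ 2.
Proof. unfold pair_radius. rewrite <- Rsqr_pow2. apply Rsqr_sqrt. nra. Qed.

Lemma pair_radius_zero x0 l : ~ 0 < pair_radius x0 l -> x0 (2*l)%nat = 0 /\ x0 (2*l+1)%nat = 0.
Proof.
  intros H. pose proof (sqrt_pos (x0 (2*l)%nat ^ 2 + x0 (2*l+1)%nat ^ 2)).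
  assert (pair_radius x0 l = 0) by (unfold pair_radius in *; lra).
  pose proof (pair_radius_sq x0 l). rewrite H1 in H2. split; nra.
Qed.

Lemma frame_orthonormal m x0 l l' : dot (2*m) (frame m x0 l) (frame m x0 l') = if andb (l =? l')%nat (l <? m)%nat then 1 else 0.
Proof.
  rewrite dot_frame. destruct (Nat.ltb_spec l m); destruct (Nat.eqb_spec l l'); cbn [andb].
  - subst. unfold frame. destruct (Nat.ltb_spec l' m); try lia.
    destruct (Rlt_dec 0 (pair_radius x0 l')).
    + rewrite Nat.eqb_refl. destruct (Nat.eqb_spec (2*l'+1) (2*l')); try lia. rewrite Nat.eqb_refl.
      pose proof (pair_radius_sq x0 l') as Hr. transitivity ((x0 (2*l')%nat ^ 2 + x0 (2*l'+1)%nat ^ 2) / pair_radius x0 l' ^ 2). field; lra. rewrite <- Hr. field; lra.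
    + rewrite Nat.eqb_refl. destruct (Nat.eqb_spec (2*l'+1) (2*l')); try lia. ring.
  - rewrite (frame_off m x0 l' (2*l)), (frame_off m x0 l' (2*l+1)) by lia. ring.
  - auto.
  - auto.
Qed.

Lemma frame_orth_x0 m x0 l : dot (2*m) (frame m x0 l) x0 = 0.
Proof.
  rewrite dot_frame. destruct (Nat.ltb_spec l m); auto. unfold frame.
  destruct (Nat.ltb_spec l m); try lia.
  destruct (Rlt_dec 0 (pair_radius x0 l)).
  - rewrite Nat.eqb_refl. destruct (Nat.eqb_spec (2*l+1) (2*l)); try lia. rewrite Nat.eqb_refl. field. lra.
  - destruct (pair_radius_zero x0 l n) as [H1 H2]. rewrite H1, H2. ring.
Qed.

(* x is k-revealed when it has no component along u_l for l >= k.  All the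
   information a PIFO algorithm gathers after k "useful" queries is k-revealed. *)
Definition revealed m x0 (k : nat) (v : vec) : Prop := forall l, (k <= l)%nat -> dot (2*m) (frame m x0 l) v = 0.

Lemma revealed_mono m x0 k k' v : (k <= k')%nat -> revealed m x0 k v -> revealed m x0 k' v.
Proof. intros H Hs l Hl. apply Hs. lia. Qed.

Lemma revealed_vadd m x0 k x y : revealed m x0 k x -> revealed m x0 k y -> revealed m x0 k (vadd x y).
Proof. intros Hx Hy l Hl. rewrite dot_add_r, Hx, Hy; auto; ring. Qed.
Lemma revealed_vscal m x0 k a x : revealed m x0 k x -> revealed m x0 k (vscal a x).
Proof. intros Hx l Hl. rewrite dot_scal_r, Hx; auto; ring. Qed.
Lemma revealed_vzero m x0 k : revealed m x0 k vzero.
Proof. intros l Hl. apply dot_zero_r. Qed.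

Lemma revealed_lincomb m x0 k cs vs : (forall v, In v vs -> revealed m x0 k v) -> revealed m x0 k (lincomb cs vs).
Proof.
  revert vs. induction cs; intros vs H; simpl. apply revealed_vzero.
  destruct vs. apply revealed_vzero. apply revealed_vadd. apply revealed_vscal, H; simpl; auto.
  apply IHcs. intros; apply H; simpl; auto.
Qed.

Lemma revealed_vsum m x0 k P c w : (forall p, (p < P)%nat -> c p = 0 \/ revealed m x0 k (w p)) -> revealed m x0 k (vsum P c w).
Proof.
  intros H l Hl. rewrite dot_vsum_r. rewrite <- (sumd_zero P). apply sumd_ext. intros p Hp.
  destruct (H p Hp) as [H1|H1]. rewrite H1; ring. rewrite H1; auto; ring.
Qed.

Lemma revealed_x0 m x0 : revealed m x0 0 x0.
Proof. intros l _. apply frame_orth_x0. Qed.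

Definition quad_progress d m x0 C (k k' : nat) :=
  forall x, revealed m x0 k x -> forall p, (p < qsize C)%nat -> quad_coef d C x p = 0 \/ revealed m x0 k' (qdir C p).

Lemma quad_grad_progress m x0 C k k' x : quad_progress (2*m) m x0 C k k' -> revealed m x0 k x ->
  revealed m x0 k' (quad_grad (2*m) C x).
Proof. intros H Hx. apply revealed_vsum. intros p Hp. apply H; auto. Qed.

Lemma quad_prox_progress m x0 C k k' g x : (k <= k')%nat -> quad_progress (2*m) m x0 C k k' -> revealed m x0 k x ->
  revealed m x0 k' (quad_prox (2*m) C g x).
Proof.
  intros Hk H Hx. unfold quad_prox. apply revealed_vadd.
  - exact (revealed_mono m x0 k k' x Hk Hx).
  - apply revealed_vsum. intros p Hp.
    destruct (H x Hx p Hp) as [H0|H0].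
    + left. unfold prox_coef. rewrite H0. unfold Rdiv. ring.
    + right; auto.
Qed.



(* The history invariant.  [count_hits H is] counts the queried indices i
   with [H i] ("active" components); if each component f_i raises the
   revealed level by at most [b2n (H i)], every iterate and every vector in the
   span available to the algorithm is (count_hits H is)-revealed. *)

Fixpoint count_hits (H : nat -> bool) (l : list nat) : nat :=
  match l with [] => O | i :: l' => (Nat.b2n (H i) + count_hits H l')%nat end.

Section HistoryInvariant.
Variable m : nat.
Variable A : pifo.
Variable comps : nat -> quad.
Variable H : nat -> bool.
Let d := (2 * m)%nat.
Let x0 := px0 A.
Let f := fun i => quad_val d (comps i).
Let gf := fun i => quad_grad d (comps i).
Let prox := fun i g x => quad_prox d (comps i) g x.

Hypothesis Hpn : forall h, h <> [] -> in_span (span_set A h) (pnext A h).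
Hypothesis Hprog : forall i k, quad_progress d m x0 (comps i) k (Nat.b2n (H i) + k).

Lemma span_step_revealed i is :
  (forall v, In v (span_set A (hist A f gf prox is)) -> revealed m x0 (count_hits H is) v) ->
  revealed m x0 (count_hits H is) (xof A (hist A f gf prox is)) ->
  forall v, In v (span_set A (hist A f gf prox (i :: is))) -> revealed m x0 (count_hits H (i :: is)) v.
Proof.
  intros IHspan IHx v Hv.
  set (h := hist A f gf prox is) in *.
  assert (Hk : (count_hits H is <= count_hits H (i :: is))%nat) by (simpl; lia).
  assert (Hold : forall w, In w (span_set A h) -> revealed m x0 (count_hits H (i :: is)) w).
  { intros w Hw. eapply revealed_mono; [exact Hk|]. auto. }
  simpl in Hv. fold h in Hv. unfold span_set in Hv, Hold. simpl in Hv.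
  repeat (rewrite in_app_iff in Hv; simpl in Hv).
  destruct Hv as [Hv|[Hv|[Hv|[Hv|[Hv|Hv]]]]];
    try (apply Hold; rewrite !in_app_iff; tauto); subst v.
  - eapply revealed_mono; eauto.
  - apply (quad_grad_progress m x0 (comps i) (count_hits H is)); auto.
  - apply (quad_prox_progress m x0 (comps i) (count_hits H is)); auto; simpl; lia.
Qed.

Lemma history_revealed is :
  revealed m x0 (count_hits H is) (xof A (hist A f gf prox is)) /\
  forall v, In v (span_set A (hist A f gf prox is)) -> revealed m x0 (count_hits H is) v.
Proof.
  induction is as [|i is' [IHx IHspan]].
  - simpl. split. apply revealed_x0. unfold span_set. simpl. tauto.
  - pose proof (span_step_revealed i is' IHspan IHx) as Hspan. split; auto.
    assert (Hx : xof A (hist A f gf prox (i :: is')) = pnext A (hist A f gf prox (i :: is'))) by reflexivity.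
    destruct (Hpn (hist A f gf prox (i :: is'))) as [cs [_ Hcs]]; [simpl; discriminate|].
    rewrite Hx, Hcs. apply revealed_lincomb. exact Hspan.
Qed.
End HistoryInvariant.

(* Expectations over i.i.d. index sequences. *)

Lemma expect_mono n p t G1 G2 : (forall j, (j < n)%nat -> 0 <= p j) -> (forall l, G1 l <= G2 l) ->
  expect n p t G1 <= expect n p t G2.
Proof.
  revert G1 G2. induction t; intros G1 G2 Hp HG; simpl; auto.
  apply sumd_le. intros j Hj. apply Rmult_le_compat_l; auto.
Qed.

Lemma expect_ext n p t G1 G2 : (forall l, G1 l = G2 l) -> expect n p t G1 = expect n p t G2.
Proof.
  revert G1 G2. induction t; intros G1 G2 HG; simpl; auto.
  apply sumd_ext. intros j _. f_equal. apply IHt. auto.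
Qed.

(* Linearity: after t draws, the expected number of hits is t P(H). *)
Lemma expect_affine_count n p t Hd al sg : sumd n p = 1 ->
  expect n p t (fun l => al - sg * INR (count_hits Hd l)) =
  al - sg * INR t * sumd n (fun j => p j * INR (Nat.b2n (Hd j))).
Proof.
  intros Hs. revert al. induction t; intros al; simpl expect. simpl; lra.
  rewrite (sumd_ext n _ (fun j => (al - sg * INR t * sumd n (fun j => p j * INR (Nat.b2n (Hd j)))) * p j - sg * (p j * INR (Nat.b2n (Hd j))))).
  2:{ intros j Hj. rewrite (expect_ext n p t _ (fun l => (al - sg * INR (Nat.b2n (Hd j))) - sg * INR (count_hits Hd l))).
      rewrite IHt. ring.
      intros l. simpl count_hits. rewrite plus_INR. ring. }
  rewrite sumd_sub, !sumd_scal. rewrite S_INR, Hs. ring.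
Qed.

Lemma favg_convex n d comps : (1 <= n)%nat -> (forall i, valid_quad d (comps i)) ->
  convex_on d (favg n (fun i => quad_val d (comps i))).
Proof.
  intros Hn HV x y a _ _ Ha. unfold favg.
  assert (0 < / INR n) by (apply Rinv_0_lt_compat, lt_0_INR; lia).
  replace (a * (/ INR n * sumd n (fun i => quad_val d (comps i) x)) + (1 - a) * (/ INR n * sumd n (fun i => quad_val d (comps i) y)))
    with (/ INR n * (sumd n (fun i => a * quad_val d (comps i) x + (1-a) * quad_val d (comps i) y))).
  2:{ rewrite sumd_add, !sumd_scal. ring. }
  apply Rmult_le_compat_l; [lra|]. apply sumd_le. intros. apply quad_convex; auto.
Qed.

Definition hard_instance (n d : nat) (A : pifo) (L B eps T : R) : Prop :=
  exists (f : nat -> vec -> R) (gf : nat -> vec -> vec) (prox : nat -> R -> vec -> vec),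
    (forall i x, (i < n)%nat -> inR d x -> has_grad d (f i) x (gf i x)) /\
    (forall i gamma x, (i < n)%nat -> 0 < gamma -> inR d x ->
        is_prox d (f i) gamma x (prox i gamma x)) /\
    avg_smooth n d gf L /\
    convex_on d (favg n f) /\
    exists xs : vec,
      inR d xs /\
      (forall y, inR d y -> favg n f xs <= favg n f y) /\
      norm d (vsub (px0 A) xs) <= B /\
      forall t : nat,
        INR t <= T ->
        expect n (pp A) t (fun is => favg n f (xof A (hist A f gf prox is))) - favg n f xs >= eps.

Lemma hard_instance_of_quads n m A comps H L B eps (xs : vec) al sg T :
  (1 <= n)%nat -> valid_pifo n (2*m) A ->
  (forall i, valid_quad (2*m) (comps i)) ->
  avg_smooth n (2*m) (fun i => quad_grad (2*m) (comps i)) L ->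
  (forall i k, quad_progress (2*m) m (px0 A) (comps i) k (Nat.b2n (H i) + k)) ->
  inR (2*m) xs ->
  (forall y, favg n (fun i => quad_val (2*m) (comps i)) xs <= favg n (fun i => quad_val (2*m) (comps i)) y) ->
  norm (2*m) (vsub (px0 A) xs) <= B ->
  (forall k x, revealed m (px0 A) k x ->
     favg n (fun i => quad_val (2*m) (comps i)) x - favg n (fun i => quad_val (2*m) (comps i)) xs >= al - sg * INR k) ->
  (forall t : nat, INR t <= T -> al - sg * INR t * sumd n (fun j => pp A j * INR (Nat.b2n (H j))) >= eps) ->
  hard_instance n (2*m) A L B eps T.
Proof.
  intros Hn HA HV HS HP Hxs Hmin Hnorm Hgap Ht.
  set (F := fun i => quad_val (2*m) (comps i)).
  exists F, (fun i => quad_grad (2*m) (comps i)), (fun i g x => quad_prox (2*m) (comps i) g x).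
  split; [intros; apply quad_has_grad; auto|].
  split; [intros; apply quad_is_prox; auto|].
  split; auto.
  split; [apply favg_convex; auto|].
  exists xs. split; auto. split; auto. split; auto.
  intros t HtT. destruct HA as [Hp [Hs [_ [_ Hpn]]]].
  apply Rle_ge.
  apply Rle_trans with (expect n (pp A) t (fun is => (favg n F xs + al) - sg * INR (count_hits H is)) - favg n F xs).
  - rewrite expect_affine_count by auto. specialize (Ht t HtT). lra.
  - apply Rplus_le_compat_r. apply expect_mono; auto. intros l.
    destruct (history_revealed m A comps H Hpn HP l) as [Hx _].
    specialize (Hgap _ _ Hx). unfold F. lra.
Qed.

(* The instance for small r (dimension 2).  With U = u_0, every component
   carries the curvature L along U and only the light component jA carries
   the linear term:  f_i(x) = L/2 <U,x>^2 - [i = jA] n L B <U,x>,  so that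
   f(x) = L/2 <U,x>^2 - L B <U,x> is minimised at x0 + B U, and any point
   not yet touched by a query to jA has gap L B^2 / 2. *)

Definition single_quad (n : nat) (x0 : vec) (jA : nat) (L B : R) (i : nat) : quad :=
  mkquad 1 (fun _ => frame 1 x0 0) (fun _ => L) (fun _ => if (i =? jA)%nat then INR n * L * B else 0).

Lemma favg_single n x0 jA L B x : (1 <= n)%nat -> (jA < n)%nat ->
  favg n (fun i => quad_val (2*1) (single_quad n x0 jA L B i)) x =
  L / 2 * (dot (2*1) (frame 1 x0 0) x)^2 - L * B * dot (2*1) (frame 1 x0 0) x.
Proof.
  intros Hn Hj. unfold favg, quad_val, single_quad. simpl qsize. simpl qdir. simpl qcurv. simpl qlin.
  set (z := dot (2*1) (frame 1 x0 0) x).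
  rewrite (sumd_ext n _ (fun i => L/2 * z^2 - z * (if (i =? jA)%nat then INR n * L * B else 0))).
  2:{ intros. simpl. ring. }
  rewrite sumd_sub, (sumd_scal n z), sumd_indicator, sumd_const by auto.
  assert (0 < INR n) by (apply lt_0_INR; lia). field. lra.
Qed.

Lemma valid_single_quad n x0 jA L B i : 0 <= L -> valid_quad (2*1) (single_quad n x0 jA L B i).
Proof.
  intros HL. split.
  - intros p Hp. simpl. split; [exact (frame_inR 1 x0 0)|lra].
  - intros p q Hp Hq Hpq. simpl in *. lia.
Qed.

Lemma single_quad_avg_smooth n x0 jA L B : (1 <= n)%nat -> 0 <= L ->
  avg_smooth n (2*1) (fun i => quad_grad (2*1) (single_quad n x0 jA L B i)) L.
Proof.
  intros Hn HL x y _ _.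
  assert (HU : norm2 (2*1) (frame 1 x0 0) = 1) by (unfold norm2; rewrite frame_orthonormal; reflexivity).
  apply Rle_trans with (/ INR n * sumd n (fun i => 1^2 * L^2 * norm2 (2*1) (vsub x y))).
  - apply Rmult_le_compat_l. apply Rlt_le, Rinv_0_lt_compat, lt_0_INR; lia.
    apply sumd_le. intros i Hi. apply quad_grad_lipschitz; [apply valid_single_quad; auto|].
    intros p Hp. cbn [qcurv qdir single_quad]. rewrite HU. lra.
  - rewrite sumd_const. assert (0 < INR n) by (apply lt_0_INR; lia). right. field. lra.
Qed.

(* Only queries to jA reveal U: for i <> jA the gradient coefficient
   L <U,x> vanishes at 0-revealed points. *)
Lemma single_quad_progress n x0 jA L B i k :
  quad_progress (2*1) 1 x0 (single_quad n x0 jA L B i) k (Nat.b2n (i =? jA)%nat + k).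
Proof.
  intros x Hx p Hp. simpl in Hp. unfold single_quad, quad_coef; cbn [qdir qcurv qlin].
  assert (HU1 : forall k', (1 <= k')%nat -> revealed 1 x0 k' (frame 1 x0 0)).
  { intros k' Hk' l Hl. rewrite frame_orthonormal. destruct (Nat.eqb_spec l 0); simpl; auto; lia. }
  destruct (Nat.eqb_spec i jA).
  - right. apply HU1. simpl. lia.
  - destruct k as [|k].
    + left. rewrite (Hx 0%nat) by lia. ring.
    + right. apply HU1. simpl. lia.
Qed.

Lemma hard_instance_small n L B eps A jA T : (1 <= n)%nat -> 0 < L -> 0 < B -> eps <= L * B^2 / 4 ->
  valid_pifo n (2*1) A -> (jA < n)%nat -> T * pp A jA <= 1/2 ->
  hard_instance n (2*1) A L B eps T.
Proof.
  intros Hn HL HB HeL HA Hj HT.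
  set (x0 := px0 A). set (U := frame 1 x0 0).
  assert (HUU : dot (2*1) U U = 1). { unfold U. rewrite frame_orthonormal. reflexivity. }
  assert (HUx0 : dot (2*1) U x0 = 0). { apply frame_orth_x0. }
  set (xs := vadd x0 (vscal B U)).
  assert (Hzs : dot (2*1) U xs = B). { unfold xs. rewrite dot_add_r, dot_scal_r, HUx0, HUU. ring. }
  assert (Hpj : 0 <= pp A jA). { destruct HA as [Hp _]. apply Hp; auto. }
  apply (hard_instance_of_quads n 1 A (single_quad n x0 jA L B) (fun i => (i =? jA)%nat) L B eps xs
           (L*B^2/2) (L*B^2/2) T); auto.
  - intros i. apply valid_single_quad. lra.
  - apply single_quad_avg_smooth; auto; lra.
  - intros i k. apply single_quad_progress.
  - apply inR_vadd. destruct HA as [_ [_ [H0 _]]]. exact H0. intros k Hk. unfold vscal. unfold U. rewrite (frame_inR 1 x0 0 k Hk). ring.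
  - (* f(y) - f(xs) = L/2 (<U,y> - B)^2 *)
    intros y. rewrite !favg_single by auto. fold U. rewrite Hzs. set (z := dot (2*1) U y).
    assert (0 <= L * (z - B)^2) by (apply Rmult_le_pos; [lra|apply pow2_ge_0]). nra.
  - assert (E : norm2 (2*1) (vsub (px0 A) xs) = B^2).
    { rewrite (norm2_ext _ _ (vscal (-B) U)). unfold norm2. rewrite dot_scal_l, dot_scal_r, HUU. ring.
      intros k. unfold xs, vsub, vadd, vscal. fold x0. ring. }
    unfold norm. rewrite E. rewrite sqrt_pow2; lra.
  - intros k x Hx. rewrite !favg_single by auto. fold U. rewrite Hzs. set (z := dot (2*1) U x).
    destruct k as [|k].
    + assert (z = 0) by (apply Hx; lia). rewrite H. simpl. lra.
    + rewrite S_INR. pose proof (pos_INR k).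
      assert (0 <= L * (z - B)^2) by (apply Rmult_le_pos; [lra|apply pow2_ge_0]).
      assert (0 <= L * B^2 * INR k) by (apply Rmult_le_pos; [nra|lra]). nra.
  - intros t Ht.
    assert (E : sumd n (fun j => pp A j * INR (Nat.b2n (j =? jA)%nat)) = pp A jA).
    { rewrite (sumd_ext n _ (fun j => if (j =? jA)%nat then pp A jA else 0)). apply sumd_indicator; auto.
      intros j _. destruct (Nat.eqb_spec j jA); [subst j|]; simpl; ring. }
    rewrite E. pose proof (pos_INR t).
    assert (INR t * pp A jA <= 1/2). { apply Rle_trans with (T * pp A jA); auto. apply Rmult_le_compat_r; auto. }
    assert (0 < L * B^2) by (apply Rmult_lt_0_compat; nra). nra.
Qed.

(* The chain quadratic  Q(z) = z_0^2 - 2 beta z_0 + sum_{i<m} (z_i - z_{i+1})^2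
   in the coordinates z_l = <u_l, x> (with z_m = 0).  If z_K = 0 for some
   K <= m, then Q(z) >= -beta^2 K/(K+1), while its minimum value is
   -beta^2 m/(m+1), attained at z_l = beta (m - l)/(m + 1). *)

Definition chain_quad (m : nat) (beta : R) (z : nat -> R) : R :=
  z O ^ 2 - 2 * beta * z O + sumd m (fun i => (z i - z (S i))^2).

Lemma chain_quad_ext m beta z z' : (forall l, (l <= m)%nat -> z l = z' l) -> chain_quad m beta z = chain_quad m beta z'.
Proof.
  intros H. unfold chain_quad. rewrite (H O) by lia. f_equal. apply sumd_ext. intros. rewrite !H by lia. auto.
Qed.

(* With z_K = 0, Cauchy-Schwarz gives z_0^2 <= K sum_{i<K} (z_i - z_{i+1})^2,
   and minimising s^2 (K+1)/K - 2 beta s over s gives the bound. *)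
Lemma chain_quad_lb m beta z K : (K <= m)%nat -> z K = 0 ->
  chain_quad m beta z >= - beta^2 * INR K / (INR K + 1).
Proof.
  intros HK Hz. unfold chain_quad.
  set (S2 := sumd m (fun i => (z i - z (S i))^2)).
  destruct K as [|K].
  - simpl in Hz. rewrite Hz. simpl. assert (0 <= S2) by (apply sumd_nonneg; intros; apply pow2_ge_0). lra.
  - assert (HS : sumd (S K) (fun i => (z i - z (S i))^2) <= S2).
    { apply sumd_mono_len; auto. intros; apply pow2_ge_0. }
    pose proof (sumd_sq_bound (S K) (fun i => z i - z (S i))) as Hb.
    rewrite sumd_telescope, Hz in Hb. set (k := INR (S K)) in *. assert (Hk : 0 < k) by (apply lt_0_INR; lia).
    set (s := z O) in *. clearbody S2 k s.
    assert (Hs2 : (s - 0)^2 <= k * S2) by nra.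
    assert (E : 0 <= ((k+1)*s - beta * k)^2) by apply pow2_ge_0.
    assert (H1 : s^2 * (k + 1) <= k * (s^2 + S2)) by nra.
    apply Rle_ge. apply Rmult_le_reg_r with (k * (k+1)); [nra|].
    replace (- beta ^ 2 * k / (k + 1) * (k * (k + 1))) with (- beta^2 * k^2) by (field; lra).
    nra.
Qed.

Definition chain_min (m : nat) (beta : R) (l : nat) : R := beta * (INR m - INR l) / (INR m + 1).

Lemma chain_quad_at_min m beta : chain_quad m beta (chain_min m beta) = - beta^2 * INR m / (INR m + 1).
Proof.
  unfold chain_quad. rewrite (sumd_ext m _ (fun _ => (beta / (INR m + 1))^2)).
  2:{ intros. unfold chain_min. rewrite S_INR. pose proof (pos_INR m). field. lra. }
  rewrite sumd_const. unfold chain_min. simpl INR. pose proof (pos_INR m). field. lra.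
Qed.

(* The convex function k |-> m/(m+1) - k/(k+1) lies above its tangent at
   k + 1 = (m + 1)/2; this makes the gap bound affine in k. *)
Lemma chain_gap_tangent (k m : R) : 0 <= k -> 0 <= m ->
  m / (m+1) - k / (k+1) >= 3 / (m+1) - 4 * (k+1) / (m+1)^2.
Proof.
  intros Hk Hm. apply Rle_ge.
  assert (E : m / (m+1) - k/(k+1) - (3 / (m+1) - 4 * (k+1) / (m+1)^2) = (m + 1 - 2*(k+1))^2 / ((k+1) * (m+1)^2)) by (field; lra).
  assert (0 <= (m + 1 - 2*(k+1))^2 / ((k+1) * (m+1)^2)).
  { unfold Rdiv. apply Rmult_le_pos. apply pow2_ge_0. apply Rlt_le, Rinv_0_lt_compat. apply Rmult_lt_0_compat; [lra|]. nra. }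
  lra.
Qed.

Lemma chain_quad_gap m beta z k : z m = 0 -> ((k <= m)%nat -> z k = 0) ->
  chain_quad m beta z - chain_quad m beta (chain_min m beta) >=
  beta^2 * (3 / (INR m + 1) - 4 / (INR m + 1)^2) - beta^2 * (4 / (INR m + 1)^2) * INR k.
Proof.
  intros Hzm Hzk. rewrite chain_quad_at_min.
  pose proof (pos_INR m) as Hm. pose proof (pos_INR k) as Hk. pose proof (pow2_ge_0 beta) as Hb.
  destruct (Nat.le_gt_cases k m) as [Hkm|Hkm].
  - pose proof (chain_quad_lb m beta z k Hkm (Hzk Hkm)) as Hlb.
    pose proof (chain_gap_tangent (INR k) (INR m) Hk Hm) as Htan.
    assert (E1 : - beta ^ 2 * INR k / (INR k + 1) - - beta ^ 2 * INR m / (INR m + 1)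
                 = beta^2 * (INR m / (INR m + 1) - INR k / (INR k + 1))) by (field; lra).
    assert (E2 : beta^2 * (3 / (INR m + 1) - 4 / (INR m + 1)^2) - beta^2 * (4 / (INR m + 1)^2) * INR k
                 = beta^2 * (3 / (INR m + 1) - 4 * (INR k + 1) / (INR m + 1)^2)) by (field; lra).
    rewrite E2. apply Rle_ge. apply Rle_trans with (beta^2 * (INR m / (INR m + 1) - INR k / (INR k + 1))).
    + apply Rmult_le_compat_l; lra.
    + lra.
  - (* beyond the chain the bound is nonpositive, and Q >= min Q *)
    pose proof (chain_quad_lb m beta z m (le_n m) Hzm) as Hlb.
    assert (INR m + 1 <= INR k) by (rewrite <- S_INR; apply le_INR; lia).
    assert (E : beta^2 * (3 / (INR m + 1) - 4 / (INR m + 1)^2) - beta^2 * (4 / (INR m + 1)^2) * INR k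
                = beta^2 * ((3 * (INR m + 1) - 4 * (INR k + 1)) / (INR m + 1)^2)) by (field; lra).
    assert ((3 * (INR m + 1) - 4 * (INR k + 1)) / (INR m + 1)^2 <= 0).
    { unfold Rdiv. assert (0 <= / (INR m + 1)^2) by (apply Rlt_le, Rinv_0_lt_compat; nra). nra. }
    assert (beta^2 * ((3 * (INR m + 1) - 4 * (INR k + 1)) / (INR m + 1)^2) <= 0) by nra.
    lra.
Qed.

(* The odd links (u_0 - u_m, i.e. the z_0 terms, and u_{2p-1} - u_{2p}) are
   carried by the component jA, the even links u_{2p} - u_{2p+1} by jB;
   all other components vanish.  Here m = 2M and u_m = 0. *)
Definition odd_head (p : nat) : nat := if (p =? 0)%nat then 0%nat else (2*p-1)%nat.
Definition odd_tail (m p : nat) : nat := if (p =? 0)%nat then m else (2*p)%nat.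

Definition quad_odd (n M m : nat) (x0 : vec) (lam beta : R) : quad :=
  mkquad (S M) (fun p => vsub (frame m x0 (odd_head p)) (frame m x0 (odd_tail m p))) (fun _ => INR n * lam)
    (fun p => if (p =? 0)%nat then INR n * lam * beta else 0).
Definition quad_even (n M m : nat) (x0 : vec) (lam : R) : quad :=
  mkquad M (fun p => vsub (frame m x0 (2*p)) (frame m x0 (2*p+1))) (fun _ => INR n * lam) (fun _ => 0).
Definition quad_zero : quad := mkquad 0 (fun _ => vzero) (fun _ => 0) (fun _ => 0).

Definition chain_quads n M m x0 lam beta jA jB (i : nat) : quad :=
  if (i =? jA)%nat then quad_odd n M m x0 lam beta else if (i =? jB)%nat then quad_even n M m x0 lam else quad_zero.

Ltac case_nat_tests := repeat match goal with
  | |- context [Nat.eqb ?a ?b] => destruct (Nat.eqb_spec a b)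
  | |- context [Nat.ltb ?a ?b] => destruct (Nat.ltb_spec a b)
  end; cbn [andb]; try lia; try lra.

Lemma dot_frame_diff m x0 i j i' j' : dot (2*m) (vsub (frame m x0 i) (frame m x0 j)) (vsub (frame m x0 i') (frame m x0 j')) =
  (if andb (i =? i')%nat (i <? m)%nat then 1 else 0) - (if andb (i =? j')%nat (i <? m)%nat then 1 else 0)
  - (if andb (j =? i')%nat (j <? m)%nat then 1 else 0) + (if andb (j =? j')%nat (j <? m)%nat then 1 else 0).
Proof. rewrite dot_sub_l, !dot_sub_r, !frame_orthonormal. ring. Qed.

Lemma revealed_frame_diff m x0 k i j : (i < k)%nat -> ((j < k)%nat \/ (m <= j)%nat) -> revealed m x0 k (vsub (frame m x0 i) (frame m x0 j)).
Proof. intros Hi Hj l Hl. rewrite dot_sub_r, !frame_orthonormal. destruct Hj; case_nat_tests. Qed.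

Lemma frame_diff_unrevealed m x0 k x i j : revealed m x0 k x -> (k <= i)%nat -> (k <= j)%nat -> dot (2*m) (vsub (frame m x0 i) (frame m x0 j)) x = 0.
Proof. intros Hx Hi Hj. rewrite dot_sub_l, Hx, Hx by auto. ring. Qed.

Lemma valid_quad_odd n M m x0 lam beta : 0 <= lam -> valid_quad (2*m) (quad_odd n M m x0 lam beta).
Proof.
  intros Hlam. split.
  - intros p Hp. split. apply inR_vsub; apply frame_inR. simpl. apply Rmult_le_pos; auto. apply pos_INR.
  - intros p q Hp Hq Hpq. simpl in Hp, Hq. simpl qdir. rewrite dot_frame_diff. unfold odd_head, odd_tail.
    destruct (Nat.eqb_spec p 0); destruct (Nat.eqb_spec q 0); case_nat_tests.
Qed.

Lemma valid_quad_even n M m x0 lam : 0 <= lam -> valid_quad (2*m) (quad_even n M m x0 lam).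
Proof.
  intros Hlam. split.
  - intros p Hp. split. apply inR_vsub; apply frame_inR. simpl. apply Rmult_le_pos; auto. apply pos_INR.
  - intros p q Hp Hq Hpq. simpl in Hp, Hq. simpl qdir. rewrite dot_frame_diff. case_nat_tests.
Qed.

Lemma valid_quad_zero d : valid_quad d quad_zero.
Proof. split; intros; simpl in *; lia. Qed.

Lemma valid_chain_quads n M m x0 lam beta jA jB i : 0 <= lam ->
  valid_quad (2*m) (chain_quads n M m x0 lam beta jA jB i).
Proof.
  intros Hlam. unfold chain_quads. destruct (i =? jA)%nat.
  - apply valid_quad_odd; auto.
  - destruct (i =? jB)%nat; [apply valid_quad_even; auto|apply valid_quad_zero].
Qed.

Lemma bounds_quad_odd n M m x0 lam beta p : m = (2 * M)%nat -> (1 <= M)%nat ->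
  (p < qsize (quad_odd n M m x0 lam beta))%nat ->
  qcurv (quad_odd n M m x0 lam beta) p <= INR n * lam /\ 0 < norm2 (2*m) (qdir (quad_odd n M m x0 lam beta) p) <= 2.
Proof.
  intros Hm HM Hp. simpl in Hp. split. simpl; lra. unfold norm2. simpl qdir. rewrite dot_frame_diff.
  unfold odd_head, odd_tail. destruct (Nat.eqb_spec p 0); case_nat_tests.
Qed.

Lemma bounds_quad_even n M m x0 lam p : m = (2 * M)%nat ->
  (p < qsize (quad_even n M m x0 lam))%nat ->
  qcurv (quad_even n M m x0 lam) p <= INR n * lam /\ 0 < norm2 (2*m) (qdir (quad_even n M m x0 lam) p) <= 2.
Proof.
  intros Hm Hp. simpl in Hp. split. simpl; lra. unfold norm2. simpl qdir. rewrite dot_frame_diff. case_nat_tests.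
Qed.

Definition is_active (jA jB i : nat) : bool := orb (i =? jA)%nat (i =? jB)%nat.

(* Along the odd links the revealed level only grows on queries to jA, along
   the even links only on queries to jB: a link u_i - u_j whose endpoints are
   both unrevealed has zero gradient coefficient. *)
Lemma chain_quads_progress n M m x0 lam beta jA jB i k :
  quad_progress (2*m) m x0 (chain_quads n M m x0 lam beta jA jB i) k (Nat.b2n (is_active jA jB i) + k).
Proof.
  intros x Hx p Hp. unfold chain_quads, is_active in *. destruct (Nat.eqb_spec i jA).
  - simpl in Hp. simpl Nat.b2n. unfold quad_coef. simpl qdir; simpl qcurv; simpl qlin.
    destruct (Nat.eqb_spec p 0).
    + right. subst p. unfold odd_head, odd_tail; simpl. apply revealed_frame_diff; lia.
    + destruct (Nat.le_gt_cases (2*p) k).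
      * right. unfold odd_head, odd_tail. destruct (Nat.eqb_spec p 0); try lia. apply revealed_frame_diff; lia.
      * left. unfold odd_head, odd_tail. destruct (Nat.eqb_spec p 0); try lia. rewrite (frame_diff_unrevealed m x0 k) by (auto; lia). ring.
  - destruct (Nat.eqb_spec i jB).
    + simpl in Hp. simpl Nat.b2n. unfold quad_coef. simpl qdir; simpl qcurv; simpl qlin.
      destruct (Nat.le_gt_cases (2*p+1) k).
      * right. apply revealed_frame_diff; lia.
      * left. rewrite (frame_diff_unrevealed m x0 k) by (auto; lia). ring.
    + simpl in Hp. lia.
Qed.

Lemma frame_last_zero m x0 x : dot (2*m) (frame m x0 m) x = 0.
Proof. rewrite dot_frame. rewrite Nat.ltb_irrefl. auto. Qed.

Lemma favg_chain n M m x0 lam beta jA jB x : m = (2*M)%nat -> (1 <= n)%nat -> (jA < n)%nat -> (jB < n)%nat -> jA <> jB ->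
  favg n (fun i => quad_val (2*m) (chain_quads n M m x0 lam beta jA jB i)) x =
  lam / 2 * chain_quad m beta (fun l => dot (2*m) (frame m x0 l) x).
Proof.
  intros Hm Hn HA HB HAB. unfold favg.
  rewrite (sumd_two n _ jA jB) by (auto; intros k Hk H1 H2; unfold chain_quads; destruct (Nat.eqb_spec k jA); try lia; destruct (Nat.eqb_spec k jB); try lia; reflexivity).
  unfold chain_quads. rewrite Nat.eqb_refl. destruct (Nat.eqb_spec jB jA); try lia. rewrite Nat.eqb_refl.
  set (z := fun l => dot (2*m) (frame m x0 l) x).
  assert (Hz : forall i j, dot (2*m) (vsub (frame m x0 i) (frame m x0 j)) x = z i - z j).
  { intros. unfold z. apply dot_sub_l. }
  assert (Hzm : z m = 0) by apply frame_last_zero.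
  unfold quad_val at 1. cbn [qsize qdir qcurv qlin quad_odd]. rewrite sumd_shift.
  unfold quad_val. cbn [qsize qdir qcurv qlin quad_even].
  rewrite !Hz.
  rewrite (sumd_ext M (fun j => _) (fun p => INR n * lam / 2 * (z (2*p+1)%nat - z (2*p+2)%nat)^2)).
  2:{ intros p Hp. rewrite Hz. unfold odd_head, odd_tail. simpl (S p =? 0)%nat. cbv iota.
      replace (2 * S p - 1)%nat with (2*p+1)%nat by lia. replace (2 * S p)%nat with (2*p+2)%nat by lia. simpl; ring. }
  rewrite (sumd_ext M (fun p => INR n * lam / 2 * dot (2 * m) (vsub (frame m x0 (2 * p)) (frame m x0 (2 * p + 1))) x ^ 2 - 0 * dot (2 * m) (vsub (frame m x0 (2 * p)) (frame m x0 (2 * p + 1))) x) (fun p => INR n * lam / 2 * (z (2*p)%nat - z (2*p+1)%nat)^2)).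
  2:{ intros p Hp. rewrite Hz. ring. }
  unfold odd_head, odd_tail. simpl (0 =? 0)%nat. cbv iota. rewrite Hzm.
  unfold chain_quad.
  assert (Hs : sumd m (fun i => (z i - z (S i))^2) = sumd M (fun p => (z (2*p)%nat - z (2*p+1)%nat)^2 + (z (2*p+1)%nat - z (2*p+2)%nat)^2)).
  { clearbody z. subst m. rewrite sumd_pairs. apply sumd_ext. intros p _.
    replace (S (2*p)) with (2*p+1)%nat by lia. replace (S (2*p+1)) with (2*p+2)%nat by lia. auto. }
  rewrite Hs, sumd_add, !sumd_scal.
  assert (0 < INR n) by (apply lt_0_INR; lia). field. lra.
Qed.

Lemma frame_coord_chain_min m x0 beta l : (l <= m)%nat ->
  dot (2*m) (frame m x0 l) (vadd x0 (vsum m (chain_min m beta) (frame m x0))) = chain_min m beta l.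
Proof.
  intros Hl. rewrite dot_add_r, frame_orth_x0, dot_vsum_r.
  destruct (Nat.lt_ge_cases l m).
  - rewrite (sumd_single m _ l); auto. rewrite frame_orthonormal. rewrite Nat.eqb_refl. destruct (Nat.ltb_spec l m); try lia. simpl. ring.
    intros q Hq Hql. rewrite frame_orthonormal. destruct (Nat.eqb_spec l q); try lia. simpl. ring.
  - assert (l = m) by lia. subst l. rewrite Rplus_0_l. transitivity 0.
    + rewrite <- (sumd_zero m). apply sumd_ext.
      intros. rewrite frame_orthonormal. rewrite Nat.ltb_irrefl. destruct (m =? k)%nat; simpl; ring.
    + unfold chain_min. field. pose proof (pos_INR m). lra.
Qed.


(* A point realising the minimum of the chain quadratic, at distance
   |z*| <= beta sqrt m from x0. *)
Definition chain_point (m : nat) (x0 : vec) (beta : R) : vec :=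
  vadd x0 (vsum m (chain_min m beta) (frame m x0)).

Lemma chain_point_dist m x0 beta B : 0 <= B -> beta^2 * INR m <= B^2 ->
  norm (2*m) (vsub x0 (chain_point m x0 beta)) <= B.
Proof.
  intros HB Hbm.
  assert (E : norm2 (2*m) (vsub x0 (chain_point m x0 beta)) = sumd m (fun p => chain_min m beta p ^ 2)).
  { rewrite (norm2_ext _ _ (vscal (-1) (vsum m (chain_min m beta) (frame m x0)))).
    2:{ intros k. unfold chain_point, vsub, vadd, vscal. ring. }
    unfold norm2 at 1. rewrite dot_scal_l, dot_scal_r.
    replace (-1 * (-1 * dot (2*m) (vsum m (chain_min m beta) (frame m x0)) (vsum m (chain_min m beta) (frame m x0))))
      with (norm2 (2*m) (vsum m (chain_min m beta) (frame m x0))) by (unfold norm2; ring).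
    rewrite norm2_vsum_orth.
    - apply sumd_ext. intros p Hp. unfold norm2. rewrite frame_orthonormal, Nat.eqb_refl.
      destruct (Nat.ltb_spec p m); try lia. simpl. ring.
    - intros p q Hp Hq Hpq. rewrite frame_orthonormal. destruct (Nat.eqb_spec p q); try lia. simpl; auto. }
  assert (E2 : norm2 (2*m) (vsub x0 (chain_point m x0 beta)) <= B^2).
  { rewrite E. apply Rle_trans with (sumd m (fun _ => beta^2)); [|rewrite sumd_const; lra].
    apply sumd_le. intros p Hp. unfold chain_min.
    assert (0 <= INR p <= INR m) by (split; [apply pos_INR | apply le_INR; lia]).
    assert (0 <= (INR m - INR p)/(INR m + 1) <= 1).
    { split. apply Rmult_le_pos. lra. apply Rlt_le, Rinv_0_lt_compat; lra.
      apply Rmult_le_reg_r with (INR m + 1); [lra|]. unfold Rdiv. rewrite Rmult_assoc, Rinv_l by lra. lra. }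
    replace ((beta * (INR m - INR p) / (INR m + 1))^2) with (beta^2 * ((INR m - INR p)/(INR m + 1))^2) by (field; lra).
    assert (((INR m - INR p)/(INR m + 1))^2 <= 1) by nra.
    assert (0 <= beta^2) by apply pow2_ge_0. nra. }
  unfold norm. rewrite <- (sqrt_pow2 B) by lra. apply sqrt_le_1_alt. auto.
Qed.

(* Only jA and jB contribute to the average smoothness, each with
   Lipschitz constant 2 n lam; with 8 n lam^2 = L^2 the average is L^2. *)
Lemma chain_quads_avg_smooth n M m x0 lam beta jA jB L :
  m = (2*M)%nat -> (1 <= M)%nat -> (jA < n)%nat -> (jB < n)%nat -> jA <> jB ->
  0 < lam -> lam^2 * (8 * INR n) = L^2 ->
  avg_smooth n (2*m) (fun i => quad_grad (2*m) (chain_quads n M m x0 lam beta jA jB i)) L.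
Proof.
  intros Hm HM HjA HjB HAB Hlam Hlam2 x y _ _.
  assert (HnR : 0 < INR n) by (apply lt_0_INR; lia).
  set (X := 2^2 * (INR n * lam)^2 * norm2 (2*m) (vsub x y)).
  apply Rle_trans with (/ INR n * sumd n (fun i => if (i =? jA)%nat then X else if (i =? jB)%nat then X else 0)).
  - apply Rmult_le_compat_l. apply Rlt_le, Rinv_0_lt_compat; auto.
    apply sumd_le. intros i Hi. unfold chain_quads. destruct (Nat.eqb_spec i jA).
    + apply quad_grad_lipschitz. apply valid_quad_odd; lra. intros p Hp. apply bounds_quad_odd; auto.
    + destruct (Nat.eqb_spec i jB).
      * apply quad_grad_lipschitz. apply valid_quad_even; lra. intros p Hp. apply bounds_quad_even; auto.
      * apply Rle_trans with (2^2 * 0^2 * norm2 (2*m) (vsub x y)).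
        -- apply quad_grad_lipschitz. apply valid_quad_zero. intros p Hp. simpl in Hp. lia.
        -- right; ring.
  - rewrite (sumd_two n _ jA jB); auto.
    2:{ intros k Hk H1 H2. destruct (Nat.eqb_spec k jA); try lia. destruct (Nat.eqb_spec k jB); try lia. auto. }
    rewrite Nat.eqb_refl. destruct (Nat.eqb_spec jB jA); try lia. rewrite Nat.eqb_refl.
    unfold X. rewrite <- Hlam2. right. field. lra.
Qed.

(* The instance for large r: f = lam/2 Q(<u_l, x>) with m = 2M links, whose
   gap on k-revealed points is lam/2 times the affine bound of
   [chain_quad_gap], and P(active) = p_jA + p_jB <= 2/n. *)
Lemma hard_instance_chain n M m L B eps A jA jB lam beta T :
  m = (2*M)%nat -> (1 <= M)%nat -> (1 <= n)%nat -> 0 <= B ->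
  valid_pifo n (2*m) A -> (jA < n)%nat -> (jB < n)%nat -> jA <> jB ->
  pp A jA + pp A jB <= 2 / INR n ->
  0 < lam -> lam^2 * (8 * INR n) = L^2 -> beta^2 * INR m <= B^2 ->
  (forall t : nat, INR t <= T -> lam/2*beta^2*(3/(INR m+1) - 4/(INR m+1)^2 - 4/(INR m+1)^2 * INR t * (2/INR n)) >= eps) ->
  hard_instance n (2*m) A L B eps T.
Proof.
  intros Hm HM Hn HB HA HjA HjB HAB Hp2 Hlam Hlam2 Hbm HT.
  set (x0 := px0 A). set (xs := chain_point m x0 beta).
  set (F := fun i => quad_val (2*m) (chain_quads n M m x0 lam beta jA jB i)).
  assert (HnR : 0 < INR n) by (apply lt_0_INR; lia).
  assert (Hl0 : 0 <= lam / 2) by lra.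
  assert (Hfx : forall x, favg n F x = lam / 2 * chain_quad m beta (fun l => dot (2*m) (frame m x0 l) x)).
  { intros. apply favg_chain; auto. }
  assert (Hfxs : favg n F xs = lam / 2 * chain_quad m beta (chain_min m beta)).
  { rewrite Hfx. f_equal. apply chain_quad_ext. intros. apply frame_coord_chain_min; auto. }
  assert (Hgap : forall k x, revealed m x0 k x -> favg n F x - favg n F xs >=
            lam/2*beta^2*(3/(INR m+1) - 4/(INR m+1)^2) - lam/2*beta^2*(4/(INR m+1)^2) * INR k).
  { intros k x Hx. rewrite Hfx, Hfxs.
    pose proof (chain_quad_gap m beta (fun l => dot (2*m) (frame m x0 l) x) k
                  (frame_last_zero m x0 x) (fun _ => Hx k (le_n k))) as Hg.
    apply Rle_ge. apply Rge_le in Hg. apply (Rmult_le_compat_l (lam/2)) in Hg; auto. nra. }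
  apply (hard_instance_of_quads n m A (chain_quads n M m x0 lam beta jA jB) (is_active jA jB) L B eps xs
     (lam/2*beta^2*(3/(INR m+1) - 4/(INR m+1)^2)) (lam/2*beta^2*(4/(INR m+1)^2)) T); auto.
  - intros i. apply valid_chain_quads. lra.
  - apply (chain_quads_avg_smooth n M m x0 lam beta jA jB L); auto.
  - intros i k. apply chain_quads_progress.
  - apply inR_vadd. destruct HA as [_ [_ [H0 _]]]. exact H0. apply inR_vsum. intros. apply frame_inR.
  - (* xs minimises f since Q >= min Q *)
    intros y. change (favg n F xs <= favg n F y). rewrite Hfxs, Hfx.
    pose proof (chain_quad_lb m beta (fun l => dot (2*m) (frame m x0 l) y) m (le_n m) (frame_last_zero m x0 y)).
    rewrite chain_quad_at_min. nra.
  - apply chain_point_dist; auto.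
  - intros t Ht. specialize (HT t Ht).
    assert (E : sumd n (fun j => pp A j * INR (Nat.b2n (is_active jA jB j))) = pp A jA + pp A jB).
    { rewrite (sumd_two n _ jA jB); auto.
      - unfold is_active. rewrite Nat.eqb_refl. simpl. rewrite Nat.eqb_refl. destruct (jB =? jA)%nat; simpl; ring.
      - intros k Hk H1 H2. unfold is_active. destruct (Nat.eqb_spec k jA); try lia. destruct (Nat.eqb_spec k jB); try lia. simpl. ring. }
    rewrite E.
    set (c := lam / 2 * beta ^ 2 * (4 / (INR m + 1) ^ 2) * INR t).
    assert (Hc : 0 <= c).
    { apply Rmult_le_pos; [|apply pos_INR]. apply Rmult_le_pos. apply Rmult_le_pos; [lra|apply pow2_ge_0].
      apply Rmult_le_pos; [lra|]. apply Rlt_le, Rinv_0_lt_compat. pose proof (pos_INR m). nra. }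
    assert (c * (pp A jA + pp A jB) <= c * (2 / INR n)) by (apply Rmult_le_compat_l; auto).
    assert (lam / 2 * beta ^ 2 * (3 / (INR m + 1) - 4 / (INR m + 1) ^ 2 - 4 / (INR m + 1) ^ 2 * INR t * (2 / INR n)) =
      lam / 2 * beta ^ 2 * (3 / (INR m + 1) - 4 / (INR m + 1) ^ 2) - c * (2 / INR n)) by (unfold c; ring).
    unfold c in *. lra.
Qed.

(* Choice of the parameters.  With r = B n^(-1/4) sqrt(L/eps) the horizon is
   T = n (1 + r)/200 = (n + B n^(3/4) sqrt(L/eps))/200. *)

Lemma floor_exists x : 0 <= x -> exists M : nat, INR M <= x < INR M + 1.
Proof.
  intros Hx. destruct (archimed x) as [H1 H2].
  assert (0 <= up x)%Z. { apply le_IZR. simpl. lra. }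
  set (N := Z.to_nat (up x)).
  assert (HN : x < INR N). { unfold N. rewrite INR_IZR_INZ, Z2Nat.id; auto. }
  clear H1 H2 H. induction N.
  - simpl in HN. lra.
  - destruct (Rle_lt_dec (INR N) x).
    + exists N. rewrite S_INR in HN. lra.
    + apply IHN; auto.
Qed.

Lemma rpow_facts n : (1 <= n)%nat ->
  0 < Rpower (INR n) (-(1/4)) /\
  Rpower (INR n) (3/4) = INR n * Rpower (INR n) (-(1/4)) /\
  Rpower (INR n) (-(1/4)) ^ 2 * sqrt (INR n) = 1.
Proof.
  intros Hn. assert (0 < INR n) by (apply lt_0_INR; lia).
  split. { unfold Rpower. apply exp_pos. }
  split. { replace (3/4) with (1 + -(1/4)) by field. rewrite Rpower_plus, Rpower_1; auto. }
  rewrite <- Rpower_sqrt by auto. simpl. rewrite Rmult_1_r, <- !Rpower_plus.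
  replace (-(1/4) + -(1/4) + /2) with 0 by field. apply Rpower_O; auto.
Qed.

(* Small r: the light component is hit with probability <= 2/n, so within
   T = n(1+r)/200 <= n/4 queries it is hit with probability <= 1/2. *)
Lemma small_regime n L B eps A r : (2 <= n)%nat -> 0 < L -> 0 < B -> eps <= L * B ^ 2 / 4 ->
  0 <= r < 30 -> valid_pifo n (2*1) A -> hard_instance n (2*1) A L B eps (INR n * (1 + r) / 200).
Proof.
  intros Hn HL HB HeL Hr HA.
  assert (HnR : 0 < INR n) by (apply lt_0_INR; lia).
  destruct HA as [Hp [Hsum Hrest]].
  destruct (light_pair_exists n (pp A) Hn Hp Hsum) as [jA [jB [HjA [HjB [Hne Hpp]]]]].
  apply (hard_instance_small n L B eps A jA); auto; [lia|split; auto|].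
  pose proof (Hp jB HjB).
  apply Rle_trans with (INR n * (1 + r) / 200 * (2 / INR n)).
  - apply Rmult_le_compat_l; [|lra]. apply Rmult_le_pos; nra.
  - replace (INR n * (1 + r) / 200 * (2 / INR n)) with ((1 + r)/100) by (field; lra). lra.
Qed.

(* The arithmetic behind the large regime: with lam = L/(sqrt 8 sqrt n),
   beta^2 = B^2/m, 10 <= m <= r/3 and r^2 sqrt n = B^2 L/eps, the chain gap
   bound after t queries (u = 2t/n <= (1+r)/100) is still >= eps. *)
Lemma chain_budget (mR r w B L eps u : R) : 0 < w -> 0 < L -> 0 < B -> 0 < eps -> 0 <= u -> u <= (1 + r) / 100 ->
  10 <= mR -> mR <= r / 3 -> 4 + 4 * ((1 + r) / 100) <= mR + 1 -> r ^ 2 * w = B ^ 2 * (L / eps) ->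
  L / (sqrt 8 * w) / 2 * (B ^ 2 / mR) * (3 / (mR + 1) - 4 / (mR + 1) ^ 2 - 4 / (mR + 1) ^ 2 * u) >= eps.
Proof.
  intros Hw HL0 HB He Hu Hur Hm10 Hmr Hm1 Hr2.
  set (e8 := sqrt 8).
  assert (He8 : 0 < e8) by (apply sqrt_lt_R0; lra).
  assert (He82 : e8^2 = 8) by (unfold e8; rewrite <- Rsqr_pow2; apply Rsqr_sqrt; lra).
  assert (He83 : e8 <= 3) by nra.
  assert (Hbr : 3 / (mR + 1) - 4 / (mR + 1) ^ 2 - 4 / (mR + 1) ^ 2 * u >= 2 / (mR + 1)).
  { replace (3 / (mR + 1) - 4 / (mR + 1) ^ 2 - 4 / (mR + 1) ^ 2 * u) with ((3 * (mR+1) - 4 - 4 * u) / (mR+1)^2) by (field; lra).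
    apply Rle_ge. apply Rmult_le_reg_r with ((mR+1)^2). nra.
    replace (2 / (mR + 1) * (mR + 1) ^ 2) with (2 * (mR+1)) by (field; lra).
    replace ((3 * (mR + 1) - 4 - 4 * u) / (mR + 1) ^ 2 * (mR + 1) ^ 2) with (3 * (mR + 1) - 4 - 4 * u) by (field; lra).
    lra. }
  assert (HL : 0 < L / (e8 * w) / 2 * (B ^ 2 / mR)).
  { assert (0 < B^2) by nra.
    apply Rmult_lt_0_compat; [apply Rmult_lt_0_compat; [apply Rdiv_lt_0_compat; nra|lra]|apply Rdiv_lt_0_compat; lra]. }
  apply Rle_ge. apply Rle_trans with (L / (e8 * w) / 2 * (B ^ 2 / mR) * (2 / (mR + 1))).
  2:{ apply Rmult_le_compat_l; lra. }
  (* it remains that e8 m (m+1) <= r^2 = B^2 L / (eps sqrt n) *)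
  assert (HL' : L = eps * (L / eps)) by (field; lra).
  replace (L / (e8 * w) / 2 * (B ^ 2 / mR) * (2 / (mR + 1))) with ((B^2 * (L / eps)) * eps / (e8 * w * mR * (mR+1)))
    by (rewrite HL' at 1; field; repeat split; lra).
  rewrite <- Hr2.
  apply Rmult_le_reg_r with (e8 * w * mR * (mR + 1)). { apply Rmult_lt_0_compat; [apply Rmult_lt_0_compat; [nra|]|]; lra. }
  replace (r ^ 2 * w * eps / (e8 * w * mR * (mR + 1)) * (e8 * w * mR * (mR + 1))) with (r^2 * w * eps) by (field; repeat split; lra).
  assert (Hmm : e8 * (mR * (mR + 1)) <= r^2) by nra.
  assert (0 < w * eps) by nra. nra.
Qed.

Lemma large_regime n L B eps A r M : (2 <= n)%nat -> 0 < L -> 0 < B -> 0 < eps ->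
  r ^ 2 * sqrt (INR n) = B ^ 2 * (L / eps) -> 30 <= r -> INR M <= r / 6 < INR M + 1 ->
  valid_pifo n (2*(2*M)) A -> hard_instance n (2*(2*M)) A L B eps (INR n * (1 + r) / 200).
Proof.
  intros Hn HL HB He Hr2 Hr30 [HM1 HM2] HA.
  assert (HnR : 0 < INR n) by (apply lt_0_INR; lia).
  assert (HM5 : (5 <= M)%nat). { assert (4 < INR M) by lra. assert (4 < M)%nat. { apply INR_lt. simpl. lra. } lia. }
  set (m := (2*M)%nat).
  assert (HmR : INR m = 2 * INR M) by (unfold m; rewrite mult_INR; simpl; ring).
  assert (HmR0 : 0 < INR m) by (rewrite HmR; assert (0 < INR M) by (apply lt_0_INR; lia); lra).
  pose proof HA as [Hp [Hsum _]].
  destruct (light_pair_exists n (pp A) Hn Hp Hsum) as [jA [jB [HjA [HjB [Hne Hpp]]]]].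
  set (w := sqrt (INR n)).
  assert (Hw : 0 < w) by (apply sqrt_lt_R0; lra).
  assert (Hw2 : w^2 = INR n) by (unfold w; rewrite <- Rsqr_pow2; apply Rsqr_sqrt; lra).
  assert (He82 : sqrt 8 ^ 2 = 8) by (rewrite <- Rsqr_pow2; apply Rsqr_sqrt; lra).
  assert (He8 : 0 < sqrt 8) by (apply sqrt_lt_R0; lra).
  set (lam := L / (sqrt 8 * w)).
  assert (Hsm : 0 < sqrt (INR m)) by (apply sqrt_lt_R0; lra).
  assert (Hsm2 : sqrt (INR m) ^ 2 = INR m) by (rewrite <- Rsqr_pow2; apply Rsqr_sqrt; lra).
  set (beta := B / sqrt (INR m)).
  assert (Hb2 : beta^2 = B^2 / INR m).
  { unfold beta. rewrite <- Hsm2 at 2. field. lra. }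
  apply (hard_instance_chain n M m L B eps A jA jB lam beta); auto; try lia.
  - apply Rlt_le; auto.
  - unfold lam. apply Rdiv_lt_0_compat; [lra|nra].
  - unfold lam. replace (8 * INR n) with (sqrt 8 ^ 2 * w ^ 2) by (rewrite He82, Hw2; ring). field. nra.
  - rewrite Hb2. right. field. lra.
  - intros t Ht. rewrite Hb2, Rmult_assoc with (r1 := 4 / (INR m + 1) ^ 2).
    apply (chain_budget (INR m) r w B L eps); auto; try lra.
    + apply Rmult_le_pos; [apply pos_INR|apply Rlt_le, Rdiv_lt_0_compat; lra].
    + apply Rle_trans with (INR n * (1 + r) / 200 * (2 / INR n)).
      * apply Rmult_le_compat_r; auto. apply Rlt_le, Rdiv_lt_0_compat; lra.
      * right. field. lra.
    + assert (5 <= INR M) by (replace 5 with (INR 5) by (simpl; lra); apply le_INR; lia). lra.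
Qed.

Theorem theorem3p4 :
  exists c C : R, 0 < c /\ 0 < C /\
  forall (n : nat) (L B eps : R),
    (2 <= n)%nat -> 0 < L -> 0 < B -> 0 < eps -> eps <= L * B ^ 2 / 4 ->
    forall A : nat -> pifo, (forall d, valid_pifo n d (A d)) ->
    exists d : nat,
      INR d <= C * (1 + B * Rpower (INR n) (- (1 / 4)) * sqrt (L / eps)) /\
      exists (f : nat -> vec -> R) (gf : nat -> vec -> vec)
             (prox : nat -> R -> vec -> vec),
        (forall i x, (i < n)%nat -> inR d x -> has_grad d (f i) x (gf i x)) /\
        (forall i gamma x, (i < n)%nat -> 0 < gamma -> inR d x ->
            is_prox d (f i) gamma x (prox i gamma x)) /\
        avg_smooth n d gf L /\
        convex_on d (favg n f) /\
        exists xs : vec,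
          inR d xs /\
          (forall y, inR d y -> favg n f xs <= favg n f y) /\
          norm d (vsub (px0 (A d)) xs) <= B /\
          forall t : nat,
            INR t <= c * (INR n + B * Rpower (INR n) (3 / 4) * sqrt (L / eps)) ->
            expect n (pp (A d)) t
              (fun is => favg n f (xof (A d) (hist (A d) f gf prox is)))
              - favg n f xs >= eps.
Proof.
  exists (1/200), 2. split; [lra|]. split; [lra|].
  intros n L B eps Hn HL HB He HeL A HA.
  destruct (rpow_facts n ltac:(lia)) as [Hq [Hq34 Hqn]].
  set (q := Rpower (INR n) (-(1/4))) in *.
  set (s := sqrt (L / eps)).
  assert (Hs : 0 < s) by (apply sqrt_lt_R0, Rdiv_lt_0_compat; auto).
  assert (Hs2 : s^2 = L / eps) by (unfold s; rewrite <- Rsqr_pow2; apply Rsqr_sqrt, Rlt_le, Rdiv_lt_0_compat; auto).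
  set (r := B * q * s).
  assert (Hr : 0 < r) by (unfold r; apply Rmult_lt_0_compat; [apply Rmult_lt_0_compat|]; auto).
  rewrite Hq34.
  replace (1 / 200 * (INR n + B * (INR n * q) * s)) with (INR n * (1 + r) / 200) by (unfold r; field).
  destruct (Rlt_le_dec r 30) as [Hr30|Hr30].
  - exists (2*1)%nat. split; [simpl; lra|].
    apply small_regime; auto. lra.
  - destruct (floor_exists (r/6) ltac:(lra)) as [M HM].
    exists (2*(2*M))%nat. split.
    + rewrite !mult_INR. simpl. lra.
    + apply large_regime; auto.
      unfold r. replace ((B * q * s) ^ 2 * sqrt (INR n)) with (B^2 * s^2 * (q^2 * sqrt (INR n))) by ring.
      rewrite Hqn, Hs2. ring.
Qed.
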